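(* Fix positive constants $\gamma,\mu,\alpha,\chi,\theta,\varepsilon^*,C^*,C_\tau,\lambda_1,\lambda_2$, and assume $\lambda_1h\le\Delta t\le\lambda_2h$. Let $(\rho^k,\phi^k)$, $k\le n+1$, be the numerical solution of the scheme, with $\rho^{n+1}>0$ pointwise. Let $\check\rho^k,\check\phi^k\in\mathcal C$ ($k=n-2,\dots,n+1$) satisfy: (i) the perturbed scheme at step $n$, $$\frac{\check\rho^{n+1}-\check\rho^n}{\Delta t}=\nabla_h\cdot\big[(\tfrac32\check\rho^n-\tfrac12\check\rho^{n-1})\nabla_h\mathcal V^{n+\frac12}\big]+\tau_\rho^{n+\frac12},$$ $$\theta\frac{\check\phi^{n+1}-\check\phi^n}{\Delta t}=\frac\mu2\Delta_h(\check\phi^{n+1}+\check\phi^n)-\frac\alpha2(\check\phi^{n+1}+\check\phi^n)+\frac\chi2(\check\rho^{n+1}+\check\rho^n)+\tau_\phi^{n+\frac12},$$ where $\mathcal V^{n+\frac12}=\gamma\check S^{n+\frac12}-\frac\chi2(\check\phi^{n+1}+\check\phi^n)+\frac{\chi^2\Delta t}{4\theta}(\check\rho^{n+1}-\check\rho^n)$, $\check S^{n+\frac12}=\ln\check\rho^{n+1}-\frac{\check\rho^{n+1}-\check\rho^n}{2\check\rho^{n+1}}-\frac{(\check\rho^{n+1}-\check\rho^n)^2}{6(\check\rho^{n+1})^2}$, with $\|\tau_\rho^{n+\frac12}\|_2,\|\tau_\phi^{n+\frac12}\|_2\le C_\tau(\Delta t^4+h^4)$ and $\overline{\tau_\rho^{n+\frac12}}=0$;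 (ii) $\overline{\check\rho^k}=\overline{\rho^k}$ for all such $k$; (iii) $\varepsilon^*\le\check\rho^k\le C^*$, $\|\nabla_h\check\rho^k\|_\infty\le C^*$, $\|\check\rho^k-\check\rho^{k-1}\|_\infty\le C^*\Delta t$, $\|\nabla_h(\check\rho^k-\check\rho^{k-1})\|_\infty\le C^*\Delta t$; (iv) $\|\mathcal V^{n+\frac12}\|_\infty+\|\nabla_h\mathcal V^{n+\frac12}\|_\infty\le C^*$. Set $\tilde\rho^k=\check\rho^k-\rho^k$, $\tilde\phi^k=\check\phi^k-\phi^k$ and assume the a priori bounds $\|\tilde\rho^k\|_2,\|\tilde\phi^k\|_2\le\Delta t^{15/4}+h^{15/4}$ for $k=n,n-1,n-2$. Then, for $\Delta t$ and $h$ sufficiently small (depending only on the fixed constants), $$\|\tilde\rho^{n+1}\|_2\le\Delta t^3+h^3.$$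
   Context: Grid setting: $\Omega=(a,b)^3$, $N\in\mathbb N$, $h=(b-a)/N$, cell centers $(a+(i-\tfrac12)h,a+(j-\tfrac12)h,a+(k-\tfrac12)h)$, $1\le i,j,k\le N$. $\mathcal C$ is the space of cell-centered grid functions extended to ghost points by the discrete homogeneous Neumann condition $u_{0,j,k}=u_{1,j,k}$, $u_{N+1,j,k}=u_{N,j,k}$ (likewise in $j,k$). Operators: $D_xf_{i+1/2,j,k}=(f_{i+1,j,k}-f_{i,j,k})/h$, $A_xf_{i+1/2,j,k}=(f_{i+1,j,k}+f_{i,j,k})/2$, $d_xg_{i,j,k}=(g_{i+1/2,j,k}-g_{i-1/2,j,k})/h$ (analogously in $y,z$); $\nabla_hf=(D_xf,D_yf,D_zf)$, $\Delta_hf=d_xD_xf+d_yD_yf+d_zD_zf$, $\nabla_h\cdot(\mathcal D\nabla_hf)=d_x(A_x\mathcal D\,D_xf)+d_y(A_y\mathcal D\,D_yf)+d_z(A_z\mathcal D\,D_zf)$. $\langle f,g\rangle=h^3\sum f_{i,j,k}g_{i,j,k}$, $\|f\|_2^2=\langle f,f\rangle$, $\|f\|_\infty=\max|f_{i,j,k}|$, $\|\nabla_hf\|_\infty=\max$ of $|D_xf|,|D_yf|,|D_zf|$ over all faces, $\overline f=\frac{h^3}{|\Omega|}\sum f_{i,j,k}$. Scheme (classical case), parameters $\gamma,\mu,\alpha,\chi,\theta>0$: with $\hat\rho^{n+\frac12}=\big((\tfrac32\rho^n-\tfrac12\rho^{n-1})^2+\Delta t^8\big)^{1/2}$, $$\frac{\rho^{n+1}-\rho^n}{\Delta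 t}=\nabla_h\cdot\Big[\hat\rho^{n+\frac12}\nabla_h\Big(\gamma S^{n+\frac12}-\frac\chi2(\phi^{n+1}+\phi^n)+\frac{\chi^2\Delta t}{4\theta}(\rho^{n+1}-\rho^n)\Big)\Big],$$ $$\theta\frac{\phi^{n+1}-\phi^n}{\Delta t}=\frac\mu2\Delta_h(\phi^{n+1}+\phi^n)-\frac\alpha2(\phi^{n+1}+\phi^n)+\frac\chi2(\rho^{n+1}+\rho^n),$$ $S^{n+\frac12}=\ln\rho^{n+1}-\frac{\rho^{n+1}-\rho^n}{2\rho^{n+1}}-\frac{(\rho^{n+1}-\rho^n)^2}{6(\rho^{n+1})^2}$ pointwise. *)

From Stdlib Require Import Reals Lra.
Open Scope R_scope.

(** Cell-centered grid functions on (a,b)^3 with N^3 cells: only the values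
    at indices 1 <= i,j,k <= N are meaningful. *)
Definition grid := nat -> nat -> nat -> R.

(** Homogeneous discrete Neumann extension to ghost points:
    u_0 = u_1, u_{N+1} = u_N (index clamped to [1,N]). *)
Definition cl (N i : nat) : nat := Nat.min N (Nat.max 1 i).
Definition ext (N : nat) (f : grid) : grid :=
  fun i j k => f (cl N i) (cl N j) (cl N k).

(** Face operators. The value at index i of a face function in x stands for
    the face i+1/2 (i = 0..N). *)
Definition Dx (h : R) (N : nat) (f : grid) : grid :=
  fun i j k => (ext N f (S i) j k - ext N f i j k) / h.
Definition Dy (h : R) (N : nat) (f : grid) : grid :=
  fun i j k => (ext N f i (S j) k - ext N f i j k) / h.
Definition Dz (h : R) (N : nat) (f : grid) : grid :=
  fun i j k => (ext N f i j (S k) - ext N f i j k) / h.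
Definition Ax (N : nat) (f : grid) : grid :=
  fun i j k => (ext N f (S i) j k + ext N f i j k) / 2.
Definition Ay (N : nat) (f : grid) : grid :=
  fun i j k => (ext N f i (S j) k + ext N f i j k) / 2.
Definition Az (N : nat) (f : grid) : grid :=
  fun i j k => (ext N f i j (S k) + ext N f i j k) / 2.
(** d_x g_{i} = (g_{i+1/2} - g_{i-1/2})/h, used at cells i >= 1. *)
Definition dx (h : R) (g : grid) : grid :=
  fun i j k => (g i j k - g (pred i) j k) / h.
Definition dy (h : R) (g : grid) : grid :=
  fun i j k => (g i j k - g i (pred j) k) / h.
Definition dz (h : R) (g : grid) : grid :=
  fun i j k => (g i j k - g i j (pred k)) / h.

Definition divDgrad (h : R) (N : nat) (D f : grid) : grid :=
  fun i j k =>
    dx h (fun i j k => Ax N D i j k * Dx h N f i j k) i j k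
  + dy h (fun i j k => Ay N D i j k * Dy h N f i j k) i j k
  + dz h (fun i j k => Az N D i j k * Dz h N f i j k) i j k.
Definition lap (h : R) (N : nat) (f : grid) : grid :=
  fun i j k => dx h (Dx h N f) i j k + dy h (Dy h N f) i j k + dz h (Dz h N f) i j k.

Fixpoint sum1 (m : nat) (f : nat -> R) : R :=
  match m with O => 0 | S p => sum1 p f + f (S p) end.        (* i = 1..m *)
Fixpoint max1 (m : nat) (f : nat -> R) : R :=
  match m with O => 0 | S p => Rmax (max1 p f) (f (S p)) end. (* i = 1..m, f >= 0 *)
Definition max0 (m : nat) (f : nat -> R) : R := Rmax (f O) (max1 m f). (* i = 0..m *)

Definition sum3 (N : nat) (f : grid) : R :=
  sum1 N (fun i => sum1 N (fun j => sum1 N (fun k => f i j k))).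

Definition ip (h : R) (N : nat) (f g : grid) : R :=
  h ^ 3 * sum3 N (fun i j k => f i j k * g i j k).
Definition norm2 (h : R) (N : nat) (f : grid) : R := sqrt (ip h N f f).
Definition norminf (N : nat) (f : grid) : R :=
  max1 N (fun i => max1 N (fun j => max1 N (fun k => Rabs (f i j k)))).
Definition gradinf (h : R) (N : nat) (f : grid) : R :=
  Rmax (Rmax
    (max0 N (fun i => max1 N (fun j => max1 N (fun k => Rabs (Dx h N f i j k)))))
    (max1 N (fun i => max0 N (fun j => max1 N (fun k => Rabs (Dy h N f i j k))))))
    (max1 N (fun i => max1 N (fun j => max0 N (fun k => Rabs (Dz h N f i j k))))).
Definition mean (a b h : R) (N : nat) (f : grid) : R :=
  h ^ 3 / (b - a) ^ 3 * sum3 N f.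

Definition on_cells (N : nat) (P : nat -> nat -> nat -> Prop) : Prop :=
  forall i j k, (1 <= i <= N)%nat -> (1 <= j <= N)%nat -> (1 <= k <= N)%nat -> P i j k.

Definition Sh (r1 r0 : R) : R :=
  ln r1 - (r1 - r0) / (2 * r1) - (r1 - r0) ^ 2 / (6 * r1 ^ 2).

Definition potential (gamma chi theta dt : R) (r1 r0 p1 p0 : grid) : grid :=
  fun i j k => gamma * Sh (r1 i j k) (r0 i j k)
    - chi / 2 * (p1 i j k + p0 i j k)
    + chi ^ 2 * dt / (4 * theta) * (r1 i j k - r0 i j k).

Definition rhohat (dt : R) (r0 rm : grid) : grid :=
  fun i j k => sqrt ((3/2 * r0 i j k - 1/2 * rm i j k) ^ 2 + dt ^ 8).

Definition scheme_step (gamma mu alpha chi theta dt h : R) (N : nat)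
    (rho phi : nat -> grid) (n : nat) : Prop :=
  on_cells N (fun i j k =>
    (rho (S n) i j k - rho n i j k) / dt =
      divDgrad h N (rhohat dt (rho n) (rho (pred n)))
        (potential gamma chi theta dt (rho (S n)) (rho n) (phi (S n)) (phi n)) i j k)
  /\ on_cells N (fun i j k =>
    theta * (phi (S n) i j k - phi n i j k) / dt =
      mu / 2 * lap h N (fun i j k => phi (S n) i j k + phi n i j k) i j k
      - alpha / 2 * (phi (S n) i j k + phi n i j k)
      + chi / 2 * (rho (S n) i j k + rho n i j k)).

Definition perturbed_step (gamma mu alpha chi theta dt h : R) (N : nat)
    (rc pc : nat -> grid) (taur tauf : grid) (n : nat) : Prop :=
  on_cells N (fun i j k =>
    (rc (S n) i j k - rc n i j k) / dt =
      divDgrad h N (fun i j k => 3/2 * rc n i j k - 1/2 * rc (pred n) i j k)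
        (potential gamma chi theta dt (rc (S n)) (rc n) (pc (S n)) (pc n)) i j k
      + taur i j k)
  /\ on_cells N (fun i j k =>
    theta * (pc (S n) i j k - pc n i j k) / dt =
      mu / 2 * lap h N (fun i j k => pc (S n) i j k + pc n i j k) i j k
      - alpha / 2 * (pc (S n) i j k + pc n i j k)
      + chi / 2 * (rc (S n) i j k + rc n i j k)
      + tauf i j k).

Definition gsub (f g : grid) : grid := fun i j k => f i j k - g i j k.

From Stdlib Require Import Reals Lra Lia.
From Coquelicot Require Import Coquelicot.
Open Scope R_scope.

(* Let e = rc^{n+1} - rho^{n+1}, r = rc^n - rho^n and q = r + dt tau_rho.  Subtracting the two
   rho-equations gives e - q = dt (div(b grad Vc) - div(rhohat grad V)) with
   b = 3/2 rc^n - 1/2 rc^(n-1); testing with Vc - V and summing by parts bounds <e - q, Vc - V>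
   by dt |b - rhohat|^2 = O(h^7), since the a priori errors are O(h^(15/4)) in l^2.
   Expanding Vc - V leaves three terms.  The entropy part gamma <e - q, S(rc) - S(rho)> is
   coercive: pointwise, (x - y - q)(S(x,a) - S(y,a')) >= c min((x-y)^2, |x-y|) up to lower order
   terms, because S is increasing in its first argument and uniformly so on a band around
   [epsS, CS]; the inverse inequality turns the l^2 a priori bounds into O(h^2) pointwise ones,
   which keeps rho^n in that band.  The phi part is bounded by the energy estimate of the
   phi-equation, and the |e|^2 term it produces cancels exactly against the stabilising term
   chi^2 dt/(4 theta) <e - q, e - r>.  Altogether M := h^3 sum min(e^2, |e|) satisfies
   M <= C (h^(7/2) |e| + h^7), and |e|^2 <= M + M^2/h^3 then gives |e| <= h^3 for h small. *)

(** * Sums over the cells *)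

Lemma sum1_ext (m : nat) (f g : nat -> R) :
  (forall i, (1 <= i <= m)%nat -> f i = g i) -> sum1 m f = sum1 m g.
Proof.
  revert f g; induction m as [|m IH]; intros f g H; simpl; [reflexivity|].
  rewrite (IH f g) by (intros; apply H; lia). rewrite H by lia. reflexivity.
Qed.

Lemma sum1_le (m : nat) (f g : nat -> R) :
  (forall i, (1 <= i <= m)%nat -> f i <= g i) -> sum1 m f <= sum1 m g.
Proof.
  revert f g; induction m as [|m IH]; intros f g H; simpl; [lra|].
  assert (sum1 m f <= sum1 m g) by (apply IH; intros; apply H; lia).
  assert (f (S m) <= g (S m)) by (apply H; lia). lra.
Qed.

Lemma sum1_plus (m : nat) (f g : nat -> R) :
  sum1 m (fun i => f i + g i) = sum1 m f + sum1 m g.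
Proof. induction m as [|m IH]; simpl; [lra|rewrite IH; lra]. Qed.

Lemma sum1_scal (m : nat) (c : R) (f : nat -> R) :
  sum1 m (fun i => c * f i) = c * sum1 m f.
Proof. induction m as [|m IH]; simpl; [lra|rewrite IH; lra]. Qed.

Lemma sum1_opp (m : nat) (f : nat -> R) : sum1 m (fun i => - f i) = - sum1 m f.
Proof. induction m as [|m IH]; simpl; [lra|rewrite IH; lra]. Qed.

Lemma sum1_minus (m : nat) (f g : nat -> R) :
  sum1 m (fun i => f i - g i) = sum1 m f - sum1 m g.
Proof. induction m as [|m IH]; simpl; [lra|rewrite IH; lra]. Qed.

Lemma sum1_const (m : nat) (c : R) : sum1 m (fun _ => c) = INR m * c.
Proof. induction m as [|m IH]; simpl sum1; [simpl; lra|rewrite IH, S_INR; lra]. Qed.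

Lemma sum1_zero (m : nat) (f : nat -> R) :
  (forall i, (1 <= i <= m)%nat -> f i = 0) -> sum1 m f = 0.
Proof. intros H. rewrite (sum1_ext m f (fun _ => 0)) by exact H. rewrite sum1_const; ring. Qed.

Lemma sum1_nonneg (m : nat) (f : nat -> R) :
  (forall i, (1 <= i <= m)%nat -> 0 <= f i) -> 0 <= sum1 m f.
Proof.
  intros H. replace 0 with (sum1 m (fun _ => 0)) by (rewrite sum1_const; ring).
  apply sum1_le, H.
Qed.

Lemma sum1_ge_term (m : nat) (f : nat -> R) (i : nat) :
  (forall i, (1 <= i <= m)%nat -> 0 <= f i) -> (1 <= i <= m)%nat -> f i <= sum1 m f.
Proof.
  revert f; induction m as [|m IH]; intros f H Hi; [lia|]. simpl.
  assert (0 <= sum1 m f) by (apply sum1_nonneg; intros; apply H; lia).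
  destruct (Nat.eq_dec i (S m)) as [->|Hne]; [lra|].
  assert (f i <= sum1 m f) by (apply IH; [intros; apply H|]; lia).
  assert (0 <= f (S m)) by (apply H; lia). lra.
Qed.

Lemma sum1_shift (m : nat) (f : nat -> R) :
  sum1 m (fun i => f (S i)) = sum1 m f - f 1%nat + f (S m).
Proof. induction m as [|m IH]; simpl; [lra|rewrite IH; lra]. Qed.

Lemma sum1_avg (m : nat) (f g : nat -> R) :
  sum1 m (fun i => (f i + g i) / 2) = (sum1 m f + sum1 m g) / 2.
Proof. induction m as [|m IH]; simpl; [field|rewrite IH; field]. Qed.

Lemma sum1_by_parts (B : nat -> nat -> R) (m : nat) :
  sum1 m (fun i => B i i - B (pred i) i) =
  - sum1 m (fun i => B i (S i) - B i i) + B m (S m) - B 0%nat 1%nat.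
Proof. induction m as [|m IH]; simpl; [lra|]. rewrite IH. destruct m; simpl; lra. Qed.

Lemma sum3_ext (N : nat) (f g : grid) :
  on_cells N (fun i j k => f i j k = g i j k) -> sum3 N f = sum3 N g.
Proof.
  intros H; unfold sum3.
  apply sum1_ext; intros; apply sum1_ext; intros; apply sum1_ext; intros; apply H; auto.
Qed.

Lemma sum3_le (N : nat) (f g : grid) :
  on_cells N (fun i j k => f i j k <= g i j k) -> sum3 N f <= sum3 N g.
Proof.
  intros H; unfold sum3.
  apply sum1_le; intros; apply sum1_le; intros; apply sum1_le; intros; apply H; auto.
Qed.

Lemma sum3_plus (N : nat) (f g : grid) :
  sum3 N (fun i j k => f i j k + g i j k) = sum3 N f + sum3 N g.
Proof.
  unfold sum3. rewrite <- sum1_plus. apply sum1_ext; intros.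
  rewrite <- sum1_plus. apply sum1_ext; intros. apply sum1_plus.
Qed.

Lemma sum3_scal (N : nat) (c : R) (f : grid) :
  sum3 N (fun i j k => c * f i j k) = c * sum3 N f.
Proof.
  unfold sum3. rewrite <- sum1_scal. apply sum1_ext; intros.
  rewrite <- sum1_scal. apply sum1_ext; intros. apply sum1_scal.
Qed.

Lemma sum3_minus (N : nat) (f g : grid) :
  sum3 N (fun i j k => f i j k - g i j k) = sum3 N f - sum3 N g.
Proof.
  unfold sum3. rewrite <- sum1_minus. apply sum1_ext; intros.
  rewrite <- sum1_minus. apply sum1_ext; intros. apply sum1_minus.
Qed.

Lemma sum3_const (N : nat) (c : R) : sum3 N (fun _ _ _ => c) = INR N ^ 3 * c.
Proof. unfold sum3. rewrite !sum1_const. ring. Qed.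

Lemma sum3_opp (N : nat) (f : grid) : sum3 N (fun i j k => - f i j k) = - sum3 N f.
Proof.
  rewrite (sum3_ext N _ (fun i j k => -1 * f i j k)) by (intros i j k _ _ _; ring).
  rewrite sum3_scal; ring.
Qed.

Lemma sum3_nonneg (N : nat) (f : grid) :
  on_cells N (fun i j k => 0 <= f i j k) -> 0 <= sum3 N f.
Proof.
  intros H. replace 0 with (sum3 N (fun _ _ _ => 0)) by (rewrite sum3_const; ring).
  apply sum3_le, H.
Qed.

Lemma sum3_ge_term (N : nat) (f : grid) (i j k : nat) :
  on_cells N (fun i j k => 0 <= f i j k) ->
  (1 <= i <= N)%nat -> (1 <= j <= N)%nat -> (1 <= k <= N)%nat -> f i j k <= sum3 N f.
Proof.
  intros H Hi Hj Hk. unfold sum3.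
  assert (Hk' : f i j k <= sum1 N (fun k => f i j k))
    by (apply (sum1_ge_term N (fun k => f i j k)); auto).
  assert (Hj' : sum1 N (fun k => f i j k) <= sum1 N (fun j => sum1 N (fun k => f i j k))).
  { apply (sum1_ge_term N (fun j => sum1 N (fun k => f i j k))); auto.
    intros; apply sum1_nonneg; intros; apply H; auto. }
  assert (sum1 N (fun j => sum1 N (fun k => f i j k))
          <= sum1 N (fun i => sum1 N (fun j => sum1 N (fun k => f i j k)))).
  { apply (sum1_ge_term N (fun i => sum1 N (fun j => sum1 N (fun k => f i j k)))); auto.
    intros; apply sum1_nonneg; intros; apply sum1_nonneg; intros; apply H; auto. }
  lra.
Qed.

(** * Discrete norms *)

Section Norms.

Variables (h : R) (N : nat).
Hypothesis h_pos : 0 < h.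

Let h3_pos : 0 < h ^ 3. Proof. apply pow_lt, h_pos. Qed.

Lemma ip_ext (f g f' g' : grid) :
  on_cells N (fun i j k => f i j k * g i j k = f' i j k * g' i j k) ->
  ip h N f g = ip h N f' g'.
Proof. intros H; unfold ip; f_equal; apply sum3_ext, H. Qed.

Lemma ip_self_nonneg (f : grid) : 0 <= ip h N f f.
Proof.
  unfold ip. apply Rmult_le_pos; [lra|]. apply sum3_nonneg; intros i j k _ _ _; nra.
Qed.

Lemma norm2_nonneg (f : grid) : 0 <= norm2 h N f.
Proof. apply sqrt_pos. Qed.

Lemma norm2_sq (f : grid) : norm2 h N f ^ 2 = ip h N f f.
Proof. unfold norm2. rewrite <- Rsqr_pow2. apply Rsqr_sqrt, ip_self_nonneg. Qed.

Lemma norm2_ext (f g : grid) :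
  on_cells N (fun i j k => f i j k = g i j k) -> norm2 h N f = norm2 h N g.
Proof.
  intros H; unfold norm2; f_equal; apply ip_ext.
  intros i j k Hi Hj Hk; rewrite H; auto.
Qed.

Lemma norm2_abs (f : grid) : norm2 h N (fun i j k => Rabs (f i j k)) = norm2 h N f.
Proof.
  unfold norm2; f_equal; apply ip_ext; intros i j k _ _ _.
  rewrite <- Rabs_mult, Rabs_right; [reflexivity|]. apply Rle_ge; nra.
Qed.

Lemma norm2_scal (c : R) (f : grid) :
  norm2 h N (fun i j k => c * f i j k) = Rabs c * norm2 h N f.
Proof.
  unfold norm2. rewrite <- (sqrt_Rsqr (Rabs c)) by apply Rabs_pos.
  rewrite <- sqrt_mult_alt by apply Rle_0_sqr. f_equal.
  rewrite <- Rsqr_abs. unfold ip, Rsqr.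
  rewrite (sum3_ext N _ (fun i j k => c * c * (f i j k * f i j k))) by (intros i j k _ _ _; ring).
  rewrite sum3_scal; ring.
Qed.

Lemma pt_sq_le_norm2 (f : grid) (i j k : nat) :
  (1 <= i <= N)%nat -> (1 <= j <= N)%nat -> (1 <= k <= N)%nat ->
  h ^ 3 * f i j k ^ 2 <= norm2 h N f ^ 2.
Proof.
  intros Hi Hj Hk. rewrite norm2_sq. unfold ip. apply Rmult_le_compat_l; [lra|].
  replace (f i j k ^ 2) with (f i j k * f i j k) by ring.
  apply (sum3_ge_term N (fun i j k => f i j k * f i j k)); auto.
  intros a b c _ _ _; nra.
Qed.

Lemma pt_abs_le_norm2 (f : grid) (i j k : nat) :
  (1 <= i <= N)%nat -> (1 <= j <= N)%nat -> (1 <= k <= N)%nat ->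
  Rabs (f i j k) <= norm2 h N f / (h * sqrt h).
Proof.
  intros Hi Hj Hk. pose proof (pt_sq_le_norm2 f i j k Hi Hj Hk) as Hpt.
  assert (Hs : 0 < sqrt h) by (apply sqrt_lt_R0, h_pos).
  assert (Hss : sqrt h * sqrt h = h) by (apply sqrt_sqrt; lra).
  assert (Hd : 0 < h * sqrt h) by (apply Rmult_lt_0_compat; lra).
  apply Rmult_le_reg_r with (h * sqrt h); [exact Hd|].
  replace (norm2 h N f / (h * sqrt h) * (h * sqrt h)) with (norm2 h N f) by (field; lra).
  apply Rsqr_incr_0_var; [|apply norm2_nonneg]. rewrite !Rsqr_pow2.
  replace ((Rabs (f i j k) * (h * sqrt h)) ^ 2) with (h ^ 2 * (sqrt h * sqrt h) * Rabs (f i j k) ^ 2)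
    by ring.
  rewrite Hss, pow2_abs. lra.
Qed.

Lemma norm2_zero_on_cells (f : grid) :
  norm2 h N f = 0 -> on_cells N (fun i j k => f i j k = 0).
Proof.
  intros H0 i j k Hi Hj Hk. pose proof (pt_sq_le_norm2 f i j k Hi Hj Hk) as Hpt.
  rewrite H0 in Hpt.
  assert (Hf : f i j k ^ 2 <= 0) by (apply Rmult_le_reg_l with (h ^ 3); lra).
  pose proof (pow2_ge_0 (f i j k)). apply Rsqr_0_uniq. rewrite Rsqr_pow2. lra.
Qed.

Lemma ip_eq_0_of_norm2_eq_0 (f g : grid) : norm2 h N f = 0 -> ip h N f g = 0.
Proof.
  intros H0. rewrite (ip_ext f g (fun _ _ _ => 0) g)
    by (intros i j k Hi Hj Hk; rewrite (norm2_zero_on_cells f H0 i j k); auto).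
  unfold ip. rewrite (sum3_ext N _ (fun _ _ _ => 0)) by (intros i j k _ _ _; ring).
  rewrite sum3_const. ring.
Qed.

(* Young's inequality with the weights that make Cauchy-Schwarz sharp. *)
Lemma mul_le_weighted_sq (x y a b : R) :
  0 < a -> 0 < b -> x * y <= b / (2 * a) * x ^ 2 + a / (2 * b) * y ^ 2.
Proof.
  intros Ha Hb.
  assert (E : b / (2 * a) * x ^ 2 + a / (2 * b) * y ^ 2 - x * y = (b * x - a * y) ^ 2 / (2 * a * b))
    by (field; lra).
  assert (0 <= (b * x - a * y) ^ 2 / (2 * a * b))
    by (apply Rle_mult_inv_pos; [apply pow2_ge_0|nra]).
  lra.
Qed.

Lemma ip_cauchy_schwarz (f g : grid) : Rabs (ip h N f g) <= norm2 h N f * norm2 h N g.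
Proof.
  set (A := norm2 h N f); set (B := norm2 h N g).
  assert (HA : 0 <= A) by apply norm2_nonneg. assert (HB : 0 <= B) by apply norm2_nonneg.
  destruct (Req_dec A 0) as [A0|A0]; [|destruct (Req_dec B 0) as [B0|B0]].
  - rewrite ip_eq_0_of_norm2_eq_0, Rabs_R0 by exact A0. apply Rmult_le_pos; auto.
  - rewrite (ip_ext f g g f) by (intros i j k _ _ _; ring).
    rewrite ip_eq_0_of_norm2_eq_0, Rabs_R0 by exact B0. apply Rmult_le_pos; auto.
  - set (W := fun i j k => B / (2 * A) * f i j k ^ 2 + A / (2 * B) * g i j k ^ 2).
    assert (HW : h ^ 3 * sum3 N W = A * B).
    { assert (Ef : h ^ 3 * sum3 N (fun i j k => f i j k ^ 2) = A ^ 2).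
      { unfold A. rewrite norm2_sq. unfold ip. f_equal. apply sum3_ext; intros i j k _ _ _; ring. }
      assert (Eg : h ^ 3 * sum3 N (fun i j k => g i j k ^ 2) = B ^ 2).
      { unfold B. rewrite norm2_sq. unfold ip. f_equal. apply sum3_ext; intros i j k _ _ _; ring. }
      unfold W. rewrite sum3_plus, !sum3_scal.
      transitivity (B / (2 * A) * (h ^ 3 * sum3 N (fun i j k => f i j k ^ 2))
                    + A / (2 * B) * (h ^ 3 * sum3 N (fun i j k => g i j k ^ 2))); [ring|].
      rewrite Ef, Eg. field. lra. }
    apply Rabs_le; split.
    + assert (- (h ^ 3 * sum3 N W) <= ip h N f g); [|lra].
      replace (- (h ^ 3 * sum3 N W)) with (h ^ 3 * sum3 N (fun i j k => - W i j k))
        by (rewrite sum3_opp; ring).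
      unfold ip.
      apply Rmult_le_compat_l; [lra|]. apply sum3_le; intros i j k _ _ _.
      pose proof (mul_le_weighted_sq (- f i j k) (g i j k) A B) as Hy. unfold W.
      replace ((- f i j k) ^ 2) with (f i j k ^ 2) in Hy by ring. lra.
    + rewrite <- HW. unfold ip. apply Rmult_le_compat_l; [lra|].
      apply sum3_le; intros i j k _ _ _. apply mul_le_weighted_sq; lra.
Qed.

Lemma ip_le_norm2 (f g : grid) : ip h N f g <= norm2 h N f * norm2 h N g.
Proof. eapply Rle_trans; [apply Rle_abs|apply ip_cauchy_schwarz]. Qed.

Lemma norm2_triangle (f g : grid) :
  norm2 h N (fun i j k => f i j k + g i j k) <= norm2 h N f + norm2 h N g.
Proof.
  pose proof (norm2_nonneg f). pose proof (norm2_nonneg g).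
  apply Rsqr_incr_0_var; [|lra]. rewrite !Rsqr_pow2, norm2_sq.
  replace (ip h N (fun i j k => f i j k + g i j k) (fun i j k => f i j k + g i j k))
    with (ip h N f f + 2 * ip h N f g + ip h N g g).
  - rewrite <- !norm2_sq. pose proof (ip_le_norm2 f g). nra.
  - unfold ip.
    rewrite (sum3_ext N (fun i j k => (f i j k + g i j k) * (f i j k + g i j k))
               (fun i j k => (f i j k * f i j k + 2 * (f i j k * g i j k)) + g i j k * g i j k))
      by (intros i j k _ _ _; ring).
    rewrite !sum3_plus, sum3_scal. ring.
Qed.

Lemma norm2_sub_le (f g : grid) :
  norm2 h N (fun i j k => f i j k - g i j k) <= norm2 h N f + norm2 h N g.
Proof.
  rewrite (norm2_ext _ (fun i j k => f i j k + -1 * g i j k)) by (intros i j k _ _ _; ring).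
  eapply Rle_trans; [apply (norm2_triangle f (fun i j k => -1 * g i j k))|].
  rewrite norm2_scal, Rabs_left by lra. lra.
Qed.

End Norms.

Lemma max1_ge (m : nat) (f : nat -> R) (i : nat) : (1 <= i <= m)%nat -> f i <= max1 m f.
Proof.
  revert i; induction m as [|m IH]; intros i Hi; [lia|]. simpl.
  destruct (Nat.eq_dec i (S m)) as [->|]; [apply Rmax_r|].
  eapply Rle_trans; [apply IH; lia|apply Rmax_l].
Qed.

Lemma max0_ge (m : nat) (f : nat -> R) (i : nat) : (i <= m)%nat -> f i <= max0 m f.
Proof.
  intros Hi. unfold max0. destruct i as [|i]; [apply Rmax_l|].
  eapply Rle_trans; [apply (max1_ge m f (S i)); lia|apply Rmax_r].
Qed.

Lemma norminf_ge (N : nat) (f : grid) (i j k : nat) :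
  (1 <= i <= N)%nat -> (1 <= j <= N)%nat -> (1 <= k <= N)%nat -> Rabs (f i j k) <= norminf N f.
Proof.
  intros Hi Hj Hk. unfold norminf.
  eapply Rle_trans;
    [|apply (max1_ge N (fun i => max1 N (fun j => max1 N (fun k => Rabs (f i j k)))) i Hi)].
  eapply Rle_trans; [|apply (max1_ge N (fun j => max1 N (fun k => Rabs (f i j k))) j Hj)].
  apply (max1_ge N (fun k => Rabs (f i j k)) k Hk).
Qed.

Lemma norminf_nonneg (N : nat) (f : grid) : 0 <= norminf N f.
Proof.
  unfold norminf. generalize (fun i => max1 N (fun j => max1 N (fun k => Rabs (f i j k)))).
  induction N as [|m IH]; intros F; simpl; [lra|].
  pose proof (IH F). pose proof (Rmax_l (max1 m F) (F (S m))). lra.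
Qed.

Lemma gradinf_ge (h : R) (N : nat) (f : grid) (i j k : nat) :
  (1 <= i <= N)%nat -> (1 <= j <= N)%nat -> (1 <= k <= N)%nat ->
  Rabs (Dx h N f i j k) <= gradinf h N f /\ Rabs (Dy h N f i j k) <= gradinf h N f
  /\ Rabs (Dz h N f i j k) <= gradinf h N f.
Proof.
  intros Hi Hj Hk. unfold gradinf. repeat split.
  - eapply Rle_trans; [|eapply Rle_trans; [apply Rmax_l|apply Rmax_l]].
    eapply Rle_trans;
      [|apply (max0_ge N (fun i => max1 N (fun j => max1 N (fun k => Rabs (Dx h N f i j k)))) i); lia].
    eapply Rle_trans; [|apply (max1_ge N (fun j => max1 N (fun k => Rabs (Dx h N f i j k))) j Hj)].
    apply (max1_ge N (fun k => Rabs (Dx h N f i j k)) k Hk).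
  - eapply Rle_trans; [|eapply Rle_trans; [apply Rmax_r|apply Rmax_l]].
    eapply Rle_trans;
      [|apply (max1_ge N (fun i => max0 N (fun j => max1 N (fun k => Rabs (Dy h N f i j k)))) i Hi)].
    eapply Rle_trans; [|apply (max0_ge N (fun j => max1 N (fun k => Rabs (Dy h N f i j k))) j); lia].
    apply (max1_ge N (fun k => Rabs (Dy h N f i j k)) k Hk).
  - eapply Rle_trans; [|apply Rmax_r].
    eapply Rle_trans;
      [|apply (max1_ge N (fun i => max1 N (fun j => max0 N (fun k => Rabs (Dz h N f i j k)))) i Hi)].
    eapply Rle_trans; [|apply (max1_ge N (fun j => max0 N (fun k => Rabs (Dz h N f i j k))) j Hj)].
    apply (max0_ge N (fun k => Rabs (Dz h N f i j k)) k); lia.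
Qed.

(** * Summation by parts and flux estimates *)

Lemma ext_in (N : nat) (f : grid) (i j k : nat) :
  (1 <= i <= N)%nat -> (1 <= j <= N)%nat -> (1 <= k <= N)%nat -> ext N f i j k = f i j k.
Proof. intros; unfold ext, cl. repeat f_equal; lia. Qed.

Lemma ext_ge (N : nat) (f : grid) (c : R) : (1 <= N)%nat ->
  on_cells N (fun i j k => c <= f i j k) -> forall i j k, c <= ext N f i j k.
Proof. intros HN H i j k. unfold ext, cl. apply H; lia. Qed.

Section Boundary.

Variables (h : R) (N : nat) (f : grid).
Hypothesis N_pos : (1 <= N)%nat.

Let cl_0 : cl N 1 = cl N 0. Proof. unfold cl; lia. Qed.
Let cl_N : cl N (S N) = cl N N. Proof. unfold cl; lia. Qed.

Lemma Dx_0 (j k : nat) : Dx h N f 0%nat j k = 0.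
Proof. unfold Dx, ext. rewrite cl_0. unfold Rdiv; ring. Qed.
Lemma Dx_N (j k : nat) : Dx h N f N j k = 0.
Proof. unfold Dx, ext. rewrite cl_N. unfold Rdiv; ring. Qed.
Lemma Dy_0 (i k : nat) : Dy h N f i 0%nat k = 0.
Proof. unfold Dy, ext. rewrite cl_0. unfold Rdiv; ring. Qed.
Lemma Dy_N (i k : nat) : Dy h N f i N k = 0.
Proof. unfold Dy, ext. rewrite cl_N. unfold Rdiv; ring. Qed.
Lemma Dz_0 (i j : nat) : Dz h N f i j 0%nat = 0.
Proof. unfold Dz, ext. rewrite cl_0. unfold Rdiv; ring. Qed.
Lemma Dz_N (i j : nat) : Dz h N f i j N = 0.
Proof. unfold Dz, ext. rewrite cl_N. unfold Rdiv; ring. Qed.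

Lemma ext_S_N (j k : nat) : ext N f (S N) j k = ext N f N j k.
Proof. unfold ext. rewrite cl_N. reflexivity. Qed.

End Boundary.

Section SummationByParts.

Variables (h : R) (N : nat) (G w : grid).
Hypothesis h_pos : 0 < h.

Lemma sum3_dx_mul : (forall j k, G 0%nat j k = 0) -> (forall j k, G N j k = 0) ->
  sum3 N (fun i j k => dx h G i j k * w i j k) =
  - sum3 N (fun i j k => G i j k * (w (S i) j k - w i j k) / h).
Proof.
  intros H0 HN. unfold sum3.
  set (B := fun i i' => sum1 N (fun j => sum1 N (fun k => G i j k * w i' j k / h))).
  rewrite (sum1_ext _ _ (fun i => B i i - B (pred i) i)).
  - rewrite sum1_by_parts.
    replace (B N (S N)) with 0 by (symmetry; apply sum1_zero; intros; apply sum1_zero; intros;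
                                   rewrite HN; unfold Rdiv; ring).
    replace (B 0%nat 1%nat) with 0 by (symmetry; apply sum1_zero; intros; apply sum1_zero; intros;
                                       rewrite H0; unfold Rdiv; ring).
    rewrite Rplus_0_r, Rminus_0_r. f_equal. apply sum1_ext; intros; unfold B.
    rewrite <- sum1_minus; apply sum1_ext; intros.
    rewrite <- sum1_minus; apply sum1_ext; intros. field; lra.
  - intros; unfold B, dx. rewrite <- sum1_minus; apply sum1_ext; intros.
    rewrite <- sum1_minus; apply sum1_ext; intros. field; lra.
Qed.

Lemma sum3_dy_mul : (forall i k, G i 0%nat k = 0) -> (forall i k, G i N k = 0) ->
  sum3 N (fun i j k => dy h G i j k * w i j k) =
  - sum3 N (fun i j k => G i j k * (w i (S j) k - w i j k) / h).
Proof.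
  intros H0 HN. unfold sum3. rewrite <- sum1_opp. apply sum1_ext; intros i _.
  set (B := fun j j' => sum1 N (fun k => G i j k * w i j' k / h)).
  rewrite (sum1_ext _ _ (fun j => B j j - B (pred j) j)).
  - rewrite sum1_by_parts.
    replace (B N (S N)) with 0 by (symmetry; apply sum1_zero; intros; rewrite HN; unfold Rdiv; ring).
    replace (B 0%nat 1%nat) with 0
      by (symmetry; apply sum1_zero; intros; rewrite H0; unfold Rdiv; ring).
    rewrite Rplus_0_r, Rminus_0_r. f_equal.
    apply sum1_ext; intros; unfold B. rewrite <- sum1_minus; apply sum1_ext; intros. field; lra.
  - intros; unfold B, dy. rewrite <- sum1_minus; apply sum1_ext; intros. field; lra.
Qed.

Lemma sum3_dz_mul : (forall i j, G i j 0%nat = 0) -> (forall i j, G i j N = 0) ->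
  sum3 N (fun i j k => dz h G i j k * w i j k) =
  - sum3 N (fun i j k => G i j k * (w i j (S k) - w i j k) / h).
Proof.
  intros H0 HN. unfold sum3. rewrite <- sum1_opp. apply sum1_ext; intros i _.
  rewrite <- sum1_opp. apply sum1_ext; intros j _.
  set (B := fun k k' => G i j k * w i j k' / h).
  rewrite (sum1_ext _ _ (fun k => B k k - B (pred k) k)).
  - rewrite sum1_by_parts.
    replace (B N (S N)) with 0 by (unfold B; rewrite HN; unfold Rdiv; ring).
    replace (B 0%nat 1%nat) with 0 by (unfold B; rewrite H0; unfold Rdiv; ring).
    rewrite Rplus_0_r, Rminus_0_r. f_equal.
    apply sum1_ext; intros; unfold B. field; lra.
  - intros; unfold B, dz. field; lra.
Qed.

End SummationByParts.

Definition face_x (h : R) (N : nat) (D1 D2 F1 F2 : grid) : grid := fun i j k =>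
  (Ax N D1 i j k * Dx h N F1 i j k - Ax N D2 i j k * Dx h N F2 i j k)
  * (Dx h N F1 i j k - Dx h N F2 i j k).
Definition face_y (h : R) (N : nat) (D1 D2 F1 F2 : grid) : grid := fun i j k =>
  (Ay N D1 i j k * Dy h N F1 i j k - Ay N D2 i j k * Dy h N F2 i j k)
  * (Dy h N F1 i j k - Dy h N F2 i j k).
Definition face_z (h : R) (N : nat) (D1 D2 F1 F2 : grid) : grid := fun i j k =>
  (Az N D1 i j k * Dz h N F1 i j k - Az N D2 i j k * Dz h N F2 i j k)
  * (Dz h N F1 i j k - Dz h N F2 i j k).

Lemma sum3_divDgrad_diff_mul (h : R) (N : nat) (D1 D2 F1 F2 : grid) :
  0 < h -> (1 <= N)%nat ->
  sum3 N (fun i j k => (divDgrad h N D1 F1 i j k - divDgrad h N D2 F2 i j k) * (F1 i j k - F2 i j k))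
  = - (sum3 N (face_x h N D1 D2 F1 F2) + sum3 N (face_y h N D1 D2 F1 F2)
       + sum3 N (face_z h N D1 D2 F1 F2)).
Proof.
  intros Hh HN.
  set (we := ext N (fun i j k => F1 i j k - F2 i j k)).
  set (Gx := fun i j k => Ax N D1 i j k * Dx h N F1 i j k - Ax N D2 i j k * Dx h N F2 i j k).
  set (Gy := fun i j k => Ay N D1 i j k * Dy h N F1 i j k - Ay N D2 i j k * Dy h N F2 i j k).
  set (Gz := fun i j k => Az N D1 i j k * Dz h N F1 i j k - Az N D2 i j k * Dz h N F2 i j k).
  rewrite (sum3_ext N _ (fun i j k => (dx h Gx i j k * we i j k + dy h Gy i j k * we i j k)
                                      + dz h Gz i j k * we i j k)).
  2:{ intros i j k Hi Hj Hk. unfold we. rewrite ext_in by auto.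
      unfold divDgrad, dx, dy, dz, Gx, Gy, Gz. field. lra. }
  rewrite !sum3_plus, sum3_dx_mul, sum3_dy_mul, sum3_dz_mul; auto;
    try (intros; unfold Gx, Gy, Gz; rewrite ?Dx_0, ?Dx_N, ?Dy_0, ?Dy_N, ?Dz_0, ?Dz_N by exact HN; ring).
  assert (Ex : sum3 N (fun i j k => Gx i j k * (we (S i) j k - we i j k) / h)
               = sum3 N (face_x h N D1 D2 F1 F2))
    by (apply sum3_ext; intros i j k _ _ _; unfold face_x, Gx, we, Dx, ext; field; lra).
  assert (Ey : sum3 N (fun i j k => Gy i j k * (we i (S j) k - we i j k) / h)
               = sum3 N (face_y h N D1 D2 F1 F2))
    by (apply sum3_ext; intros i j k _ _ _; unfold face_y, Gy, we, Dy, ext; field; lra).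
  assert (Ez : sum3 N (fun i j k => Gz i j k * (we i j (S k) - we i j k) / h)
               = sum3 N (face_z h N D1 D2 F1 F2))
    by (apply sum3_ext; intros i j k _ _ _; unfold face_z, Gz, we, Dz, ext; field; lra).
  rewrite Ex, Ey, Ez. ring.
Qed.

Lemma neg_flux_gap_le (a a' X Y c C : R) :
  0 < c -> c <= a' -> Rabs X <= C ->
  - ((a * X - a' * Y) * (X - Y)) <= (a - a') ^ 2 * C ^ 2 / (4 * c).
Proof.
  intros Hc Ha' HX.
  assert (HX2 : X ^ 2 <= C ^ 2)
    by (rewrite <- (pow2_abs X); apply pow_incr; split; [apply Rabs_pos|exact HX]).
  (* complete the square in X - Y *)
  assert (Hsq : - ((a * X - a' * Y) * (X - Y)) <= (a - a') ^ 2 * X ^ 2 / (4 * a')).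
  { apply Rmult_le_reg_r with (4 * a'); [lra|].
    replace ((a - a') ^ 2 * X ^ 2 / (4 * a') * (4 * a')) with ((a - a') ^ 2 * X ^ 2) by (field; lra).
    pose proof (pow2_ge_0 (2 * a' * (X - Y) + (a - a') * X)). nra. }
  eapply Rle_trans; [exact Hsq|]. unfold Rdiv.
  apply Rmult_le_compat; try apply Rmult_le_pos; try apply pow2_ge_0.
  - left; apply Rinv_0_lt_compat; lra.
  - apply Rmult_le_compat_l; [apply pow2_ge_0|exact HX2].
  - apply Rinv_le_contravar; lra.
Qed.

Lemma sum1_neumann_avg_le (N : nat) (E : nat -> R) : (1 <= N)%nat ->
  (forall i, (1 <= i <= N)%nat -> 0 <= E i) -> E (S N) = E N ->
  sum1 N (fun i => (E (S i) + E i) / 2) <= 2 * sum1 N E.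
Proof.
  intros HN HE Hb. rewrite sum1_avg, sum1_shift, Hb.
  assert (E N <= sum1 N E) by (apply sum1_ge_term; auto; lia).
  assert (0 <= E 1%nat) by (apply HE; lia).
  assert (0 <= sum1 N E) by (apply sum1_nonneg; auto). lra.
Qed.

Lemma sq_avg_le (x y : R) : ((x + y) / 2) ^ 2 <= (x ^ 2 + y ^ 2) / 2.
Proof. pose proof (pow2_ge_0 (x - y)). nra. Qed.

Section Averages.

Variables (N : nat) (g : grid).
Hypothesis N_pos : (1 <= N)%nat.

Lemma sum3_Ax_sq_le :
  sum3 N (fun i j k => Ax N g i j k ^ 2) <= 2 * sum3 N (fun i j k => g i j k ^ 2).
Proof.
  set (E := fun i => sum1 N (fun j => sum1 N (fun k => ext N g i j k ^ 2))).
  replace (sum3 N (fun i j k => g i j k ^ 2)) with (sum1 N E)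
    by (apply sum1_ext; intros; apply sum1_ext; intros; apply sum1_ext; intros; rewrite ext_in; auto).
  eapply Rle_trans; [|apply sum1_neumann_avg_le; auto].
  - apply sum1_le; intros i _. unfold E. rewrite <- sum1_avg.
    apply sum1_le; intros j _. rewrite <- sum1_avg. apply sum1_le; intros k _. apply sq_avg_le.
  - intros; apply sum1_nonneg; intros; apply sum1_nonneg; intros; apply pow2_ge_0.
  - unfold E. apply sum1_ext; intros; apply sum1_ext; intros. rewrite ext_S_N; auto.
Qed.

Lemma sum3_Ay_sq_le :
  sum3 N (fun i j k => Ay N g i j k ^ 2) <= 2 * sum3 N (fun i j k => g i j k ^ 2).
Proof.
  unfold sum3. rewrite <- sum1_scal. apply sum1_le; intros i Hi.
  set (E := fun j => sum1 N (fun k => ext N g i j k ^ 2)).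
  replace (sum1 N (fun j => sum1 N (fun k => g i j k ^ 2))) with (sum1 N E)
    by (apply sum1_ext; intros; apply sum1_ext; intros; rewrite ext_in; auto).
  eapply Rle_trans; [|apply sum1_neumann_avg_le; auto].
  - apply sum1_le; intros j _. unfold E. rewrite <- sum1_avg.
    apply sum1_le; intros k _. apply sq_avg_le.
  - intros; apply sum1_nonneg; intros; apply pow2_ge_0.
  - unfold E, ext. apply sum1_ext; intros. replace (cl N (S N)) with (cl N N) by (unfold cl; lia).
    reflexivity.
Qed.

Lemma sum3_Az_sq_le :
  sum3 N (fun i j k => Az N g i j k ^ 2) <= 2 * sum3 N (fun i j k => g i j k ^ 2).
Proof.
  unfold sum3. rewrite <- sum1_scal. apply sum1_le; intros i Hi.
  rewrite <- sum1_scal. apply sum1_le; intros j Hj.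
  set (E := fun k => ext N g i j k ^ 2).
  replace (sum1 N (fun k => g i j k ^ 2)) with (sum1 N E)
    by (apply sum1_ext; intros; unfold E; rewrite ext_in; auto).
  eapply Rle_trans; [|apply sum1_neumann_avg_le; auto].
  - apply sum1_le; intros k _. apply sq_avg_le.
  - intros; apply pow2_ge_0.
  - unfold E, ext. replace (cl N (S N)) with (cl N N) by (unfold cl; lia). reflexivity.
Qed.

End Averages.

Lemma sum3_flux_diff_le (h : R) (N : nat) (D1 D2 F1 F2 : grid) (c C : R) :
  0 < h -> (1 <= N)%nat -> 0 < c ->
  on_cells N (fun i j k => c <= Ax N D2 i j k /\ c <= Ay N D2 i j k /\ c <= Az N D2 i j k) ->
  on_cells N (fun i j k => Rabs (Dx h N F1 i j k) <= C /\ Rabs (Dy h N F1 i j k) <= C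
                           /\ Rabs (Dz h N F1 i j k) <= C) ->
  sum3 N (fun i j k => (divDgrad h N D1 F1 i j k - divDgrad h N D2 F2 i j k) * (F1 i j k - F2 i j k))
  <= 6 * (C ^ 2 / (4 * c)) * sum3 N (fun i j k => (D1 i j k - D2 i j k) ^ 2).
Proof.
  intros Hh HN Hc HD HF. rewrite sum3_divDgrad_diff_mul by auto.
  set (g := fun i j k => D1 i j k - D2 i j k).
  set (K := C ^ 2 / (4 * c)).
  assert (HK : 0 <= K) by (apply Rle_mult_inv_pos; [apply pow2_ge_0|lra]).
  assert (Hx : - sum3 N (face_x h N D1 D2 F1 F2) <= K * sum3 N (fun i j k => Ax N g i j k ^ 2)).
  { rewrite <- sum3_scal, <- sum3_opp. apply sum3_le; intros i j k Hi Hj Hk.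
    destruct (HD i j k Hi Hj Hk) as [H1 _]. destruct (HF i j k Hi Hj Hk) as [G1 _].
    replace (Ax N g i j k) with (Ax N D1 i j k - Ax N D2 i j k) by (unfold Ax, g, ext; field).
    pose proof (neg_flux_gap_le (Ax N D1 i j k) (Ax N D2 i j k) (Dx h N F1 i j k)
                  (Dx h N F2 i j k) c C Hc H1 G1).
    unfold face_x, K, Rdiv in *. lra. }
  assert (Hy : - sum3 N (face_y h N D1 D2 F1 F2) <= K * sum3 N (fun i j k => Ay N g i j k ^ 2)).
  { rewrite <- sum3_scal, <- sum3_opp. apply sum3_le; intros i j k Hi Hj Hk.
    destruct (HD i j k Hi Hj Hk) as [_ [H2 _]]. destruct (HF i j k Hi Hj Hk) as [_ [G2 _]].
    replace (Ay N g i j k) with (Ay N D1 i j k - Ay N D2 i j k) by (unfold Ay, g, ext; field).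
    pose proof (neg_flux_gap_le (Ay N D1 i j k) (Ay N D2 i j k) (Dy h N F1 i j k)
                  (Dy h N F2 i j k) c C Hc H2 G2).
    unfold face_y, K, Rdiv in *. lra. }
  assert (Hz : - sum3 N (face_z h N D1 D2 F1 F2) <= K * sum3 N (fun i j k => Az N g i j k ^ 2)).
  { rewrite <- sum3_scal, <- sum3_opp. apply sum3_le; intros i j k Hi Hj Hk.
    destruct (HD i j k Hi Hj Hk) as [_ [_ H3]]. destruct (HF i j k Hi Hj Hk) as [_ [_ G3]].
    replace (Az N g i j k) with (Az N D1 i j k - Az N D2 i j k) by (unfold Az, g, ext; field).
    pose proof (neg_flux_gap_le (Az N D1 i j k) (Az N D2 i j k) (Dz h N F1 i j k)
                  (Dz h N F2 i j k) c C Hc H3 G3).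
    unfold face_z, K, Rdiv in *. lra. }
  pose proof (Rmult_le_compat_l K _ _ HK (sum3_Ax_sq_le N g HN)).
  pose proof (Rmult_le_compat_l K _ _ HK (sum3_Ay_sq_le N g HN)).
  pose proof (Rmult_le_compat_l K _ _ HK (sum3_Az_sq_le N g HN)).
  change (sum3 N (fun i j k => (D1 i j k - D2 i j k) ^ 2)) with (sum3 N (fun i j k => g i j k ^ 2)).
  lra.
Qed.

Lemma sum3_lap_mul_nonpos (h : R) (N : nat) (s : grid) : 0 < h -> (1 <= N)%nat ->
  sum3 N (fun i j k => lap h N s i j k * s i j k) <= 0.
Proof.
  intros Hh HN.
  set (one := fun (_ _ _ : nat) => 1). set (zero := fun (_ _ _ : nat) => 0).
  rewrite (sum3_ext N _ (fun i j k => (divDgrad h N one s i j k - divDgrad h N one zero i j k)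
                                      * (s i j k - zero i j k))).
  2:{ intros i j k _ _ _. unfold lap, divDgrad, one, zero, dx, dy, dz, Ax, Ay, Az, Dx, Dy, Dz, ext.
      field; lra. }
  rewrite sum3_divDgrad_diff_mul by auto.
  assert (0 <= sum3 N (face_x h N one one s zero)).
  { apply sum3_nonneg; intros i j k _ _ _; unfold face_x, one, Ax, ext.
    replace (_ * _) with ((Dx h N s i j k - Dx h N zero i j k) ^ 2) by field. apply pow2_ge_0. }
  assert (0 <= sum3 N (face_y h N one one s zero)).
  { apply sum3_nonneg; intros i j k _ _ _; unfold face_y, one, Ay, ext.
    replace (_ * _) with ((Dy h N s i j k - Dy h N zero i j k) ^ 2) by field. apply pow2_ge_0. }
  assert (0 <= sum3 N (face_z h N one one s zero)).
  { apply sum3_nonneg; intros i j k _ _ _; unfold face_z, one, Az, ext.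
    replace (_ * _) with ((Dz h N s i j k - Dz h N zero i j k) ^ 2) by field. apply pow2_ge_0. }
  lra.
Qed.

Lemma le_of_sq_le_mul (S X : R) : 0 <= S -> 0 <= X -> S ^ 2 <= S * X -> S <= X.
Proof. intros HS HX H. destruct (Req_dec S 0) as [->|]; [lra|nra]. Qed.

(* Testing the phi-error equation against s = phi~^{n+1} + phi~^n: the Laplacian and the
   damping term have a sign and drop out. *)
Lemma phi_error_energy (h : R) (N : nat) (dt theta mu alpha chi : R) (s f0 w tf : grid) :
  0 < h -> (1 <= N)%nat -> 0 < dt -> 0 < theta -> 0 < mu -> 0 < alpha -> 0 < chi ->
  on_cells N (fun i j k => theta * (s i j k - 2 * f0 i j k) / dt =
     mu / 2 * lap h N s i j k - alpha / 2 * s i j k + chi / 2 * w i j k + tf i j k) ->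
  norm2 h N s <= 2 * norm2 h N f0 + dt / theta * (chi / 2 * norm2 h N w + norm2 h N tf).
Proof.
  intros Hh HN Hdt Hth Hmu Hal Hchi Heq.
  set (c := theta / dt). assert (Hc : 0 < c) by (apply Rdiv_lt_0_compat; lra).
  assert (Hpt : on_cells N (fun i j k =>
     c * (s i j k * s i j k) <= (2 * c * (f0 i j k * s i j k) + chi / 2 * (w i j k * s i j k)
                                 + tf i j k * s i j k) + mu / 2 * (lap h N s i j k * s i j k))).
  { intros i j k Hi Hj Hk.
    replace (c * (s i j k * s i j k))
      with (2 * c * (f0 i j k * s i j k) + theta * (s i j k - 2 * f0 i j k) / dt * s i j k)
      by (unfold c; field; lra).
    rewrite (Heq i j k Hi Hj Hk). pose proof (pow2_ge_0 (s i j k)). nra. }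
  apply sum3_le in Hpt. rewrite !sum3_plus, !sum3_scal in Hpt.
  pose proof (sum3_lap_mul_nonpos h N s Hh HN) as Hlap.
  assert (Hip : c * ip h N s s <= 2 * c * ip h N f0 s + chi / 2 * ip h N w s + ip h N tf s).
  { unfold ip. assert (0 < h ^ 3) by (apply pow_lt; lra).
    assert (mu / 2 * sum3 N (fun i j k => lap h N s i j k * s i j k) <= 0)
      by (pose proof (Rmult_le_compat_l (mu / 2) _ 0 ltac:(lra) Hlap); lra).
    nra. }
  rewrite <- norm2_sq in Hip by auto.
  pose proof (ip_le_norm2 h N Hh f0 s). pose proof (ip_le_norm2 h N Hh w s).
  pose proof (ip_le_norm2 h N Hh tf s).
  pose proof (norm2_nonneg h N s). pose proof (norm2_nonneg h N f0).
  pose proof (norm2_nonneg h N w). pose proof (norm2_nonneg h N tf).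
  apply le_of_sq_le_mul; auto.
  - apply Rplus_le_le_0_compat; [lra|]. apply Rmult_le_pos; [apply Rle_mult_inv_pos; lra|nra].
  - apply Rmult_le_reg_l with c; [exact Hc|].
    replace (c * (norm2 h N s
                  * (2 * norm2 h N f0 + dt / theta * (chi / 2 * norm2 h N w + norm2 h N tf))))
      with (norm2 h N s * (2 * c * norm2 h N f0 + chi / 2 * norm2 h N w + norm2 h N tf))
      by (unfold c; field; lra).
    nra.
Qed.

(** * The entropy increment *)

Definition Sh_deriv (r a : R) : R := (6 * r ^ 2 - 5 * a * r + 2 * a ^ 2) / (6 * r ^ 3).

Lemma Sh_derivable (a r : R) : 0 < r -> derivable_pt_lim (fun r => Sh r a) r (Sh_deriv r a).
Proof.
  intros Hr. apply is_derive_Reals. unfold Sh, Sh_deriv. auto_derive.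
  - repeat split; try lra; nra.
  - field. lra.
Qed.

Lemma Sh_deriv_ge (r a : R) : 0 < r -> 1 / (6 * r) <= Sh_deriv r a.
Proof.
  intros Hr. unfold Sh_deriv.
  assert (0 < r ^ 3) by (apply pow_lt; lra).
  apply Rmult_le_reg_r with (6 * r ^ 3); [lra|].
  replace (1 / (6 * r) * (6 * r ^ 3)) with (r ^ 2) by (field; lra).
  replace ((6 * r ^ 2 - 5 * a * r + 2 * a ^ 2) / (6 * r ^ 3) * (6 * r ^ 3))
    with (6 * r ^ 2 - 5 * a * r + 2 * a ^ 2) by (field; lra).
  pose proof (pow2_ge_0 (r - a / 2)). nra.
Qed.

Lemma Sh_increment (a x y : R) : 0 < y -> y <= x ->
  exists c, y <= c <= x /\ Sh x a - Sh y a = Sh_deriv c a * (x - y).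
Proof.
  intros Hy Hxy. destruct (Req_dec y x) as [<-|Hne].
  - exists y. split; [lra|ring].
  - destruct (MVT_cor2 (fun r => Sh r a) (fun r => Sh_deriv r a) y x) as [c [E Hc]].
    + lra.
    + intros; apply Sh_derivable; lra.
    + exists c. split; [lra|exact E].
Qed.

Lemma Sh_mono (a x y : R) : 0 < y -> y <= x -> Sh y a <= Sh x a.
Proof.
  intros Hy Hxy. destruct (Sh_increment a x y Hy Hxy) as [c [Hc E]].
  pose proof (Sh_deriv_ge c a ltac:(lra)).
  assert (0 < 1 / (6 * c)) by (apply Rdiv_lt_0_compat; lra).
  assert (0 <= Sh_deriv c a * (x - y)) by (apply Rmult_le_pos; lra). lra.
Qed.

Lemma Sh_cross (y a a' : R) : 0 < y ->
  Sh y a - Sh y a' = (a - a') * (5 * y - a - a') / (6 * y ^ 2).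
Proof. intros Hy. unfold Sh. field. lra. Qed.

Definition trunc_sq (u : R) : R := Rmin (u ^ 2) (Rabs u).

Lemma trunc_sq_nonneg (u : R) : 0 <= trunc_sq u.
Proof. apply Rmin_glb; [apply pow2_ge_0|apply Rabs_pos]. Qed.

Lemma sq_le_trunc_sq (u : R) : u ^ 2 <= trunc_sq u + trunc_sq u ^ 2.
Proof.
  unfold trunc_sq. destruct (Rle_dec (u ^ 2) (Rabs u)).
  - rewrite Rmin_left by lra. pose proof (pow2_ge_0 (u ^ 2)). lra.
  - rewrite Rmin_right, pow2_abs by lra. pose proof (Rabs_pos u). lra.
Qed.

Lemma mul_ge_neg_abs (s t B : R) : Rabs t <= B -> - (Rabs s * B) <= s * t.
Proof.
  intros Ht. pose proof (Rle_abs (- (s * t))). rewrite Rabs_Ropp, Rabs_mult in H.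
  pose proof (Rmult_le_compat_l (Rabs s) _ _ (Rabs_pos s) Ht). lra.
Qed.

(* Far from the band the sign of the increment is known; this turns that into a lower bound. *)
Lemma far_branch_le (u q G k l : R) :
  0 < l -> l <= Rabs u -> Rabs q <= l -> k * l <= Rabs G -> 0 <= u * G ->
  k * l * (Rabs u - Rabs q) <= (u - q) * G.
Proof.
  intros Hl Hu Hq HG HuG. pose proof (Rle_abs q). pose proof (Rle_abs (- q)). rewrite Rabs_Ropp in *.
  destruct (Rle_dec 0 u).
  - rewrite Rabs_right in * by lra.
    assert (0 <= G) by nra. rewrite Rabs_right in HG by lra.
    rewrite (Rmult_comm (u - q)). apply Rle_trans with (G * (u - Rabs q)).
    + apply Rmult_le_compat_r; lra.
    + apply Rmult_le_compat_l; lra.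
  - rewrite Rabs_left in * by lra.
    assert (G <= 0) by nra. rewrite Rabs_left1 in HG by lra.
    replace ((u - q) * G) with (- G * (q - u)) by ring. apply Rle_trans with (- G * (- u - Rabs q)).
    + apply Rmult_le_compat_r; lra.
    + apply Rmult_le_compat_l; lra.
Qed.

Section EntropyIncrement.

Variables e C : R.
Hypothesis e_pos : 0 < e.
Hypothesis C_pos : 0 < C.

Definition in_band (r : R) : Prop := e / 2 <= r <= 2 * C.

Definition Sh_coerc : R := 1 / (12 * C).
Definition Sh_lip1 : R := 128 * C ^ 2 / (3 * e ^ 3).
Definition Sh_lip2 : R := 28 * C / (3 * e ^ 2).

Lemma Sh_consts_pos : 0 < Sh_coerc /\ 0 < Sh_lip1 /\ 0 < Sh_lip2.
Proof.
  unfold Sh_coerc, Sh_lip1, Sh_lip2.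
  assert (0 < e ^ 2) by (apply pow_lt; lra). assert (0 < e ^ 3) by (apply pow_lt; lra).
  assert (0 < C ^ 2) by (apply pow_lt; lra).
  repeat split; apply Rdiv_lt_0_compat; lra.
Qed.

Lemma Sh_deriv_band (r a : R) : in_band r -> in_band a ->
  Sh_coerc <= Sh_deriv r a <= Sh_lip1.
Proof.
  unfold in_band, Sh_coerc, Sh_lip1. intros Hr Ha. split.
  - apply Rle_trans with (1 / (6 * r)); [|apply Sh_deriv_ge; lra].
    apply Rmult_le_compat_l; [lra|]. apply Rinv_le_contravar; lra.
  - unfold Sh_deriv.
    assert (He3 : 0 < e ^ 3) by (apply pow_lt; lra).
    assert (Hr3 : e ^ 3 <= 8 * r ^ 3)
      by (replace (8 * r ^ 3) with ((2 * r) ^ 3) by ring; apply pow_incr; lra).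
    assert (Hnum : 0 <= 6 * r ^ 2 - 5 * a * r + 2 * a ^ 2 <= 32 * C ^ 2).
    { assert (r ^ 2 <= (2 * C) ^ 2) by (apply pow_incr; lra).
      assert (a ^ 2 <= (2 * C) ^ 2) by (apply pow_incr; lra).
      assert (0 <= a * r) by (apply Rmult_le_pos; lra).
      pose proof (pow2_ge_0 (r - 5 * a / 12)). nra. }
    apply Rmult_le_reg_r with (6 * r ^ 3 * (3 * e ^ 3)); [nra|].
    replace ((6 * r ^ 2 - 5 * a * r + 2 * a ^ 2) / (6 * r ^ 3) * (6 * r ^ 3 * (3 * e ^ 3)))
      with ((6 * r ^ 2 - 5 * a * r + 2 * a ^ 2) * (3 * e ^ 3)) by (field; nra).
    replace (128 * C ^ 2 / (3 * e ^ 3) * (6 * r ^ 3 * (3 * e ^ 3))) with (128 * C ^ 2 * 6 * r ^ 3)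
      by (field; lra).
    assert (0 <= C ^ 2) by apply pow2_ge_0. nra.
Qed.

Lemma Sh_slope_ge (a x y : R) : in_band x -> in_band y -> in_band a -> y <= x ->
  Sh_coerc * (x - y) <= Sh x a - Sh y a.
Proof.
  unfold in_band. intros Hx Hy Ha Hxy. destruct (Sh_increment a x y ltac:(lra) Hxy) as [c [Hc ->]].
  apply Rmult_le_compat_r; [lra|]. apply Sh_deriv_band; unfold in_band; lra.
Qed.

Lemma Sh_coercive (a x y : R) : in_band x -> in_band y -> in_band a ->
  Sh_coerc * (x - y) ^ 2 <= (Sh x a - Sh y a) * (x - y).
Proof.
  intros Hx Hy Ha. destruct (Rle_dec y x).
  - pose proof (Sh_slope_ge a x y Hx Hy Ha r). nra.
  - pose proof (Sh_slope_ge a y x Hy Hx Ha ltac:(lra)). nra.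
Qed.

Lemma Sh_lipschitz (a x y : R) : in_band x -> in_band y -> in_band a ->
  Rabs (Sh x a - Sh y a) <= Sh_lip1 * Rabs (x - y).
Proof.
  assert (Hgen : forall x y, in_band x -> in_band y -> in_band a -> y <= x ->
            Rabs (Sh x a - Sh y a) <= Sh_lip1 * Rabs (x - y)).
  { unfold in_band. intros u v Hu Hv Ha Huv.
    destruct (Sh_increment a u v ltac:(lra) Huv) as [c [Hc ->]].
    destruct (Sh_deriv_band c a ltac:(unfold in_band; lra) Ha) as [Hlo Hhi].
    pose proof (proj1 Sh_consts_pos).
    rewrite Rabs_mult, (Rabs_right (Sh_deriv c a)) by lra.
    apply Rmult_le_compat_r; [apply Rabs_pos|exact Hhi]. }
  intros Hx Hy Ha. destruct (Rle_dec y x); [apply Hgen; auto; lra|].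
  rewrite Rabs_minus_sym, (Rabs_minus_sym x). apply Hgen; auto; lra.
Qed.

Lemma Sh_cross_le (y a a' : R) : in_band y -> in_band a -> in_band a' ->
  Rabs (Sh y a - Sh y a') <= Sh_lip2 * Rabs (a - a').
Proof.
  unfold in_band, Sh_lip2. intros Hy Ha Ha'. rewrite Sh_cross by lra.
  assert (He2 : 0 < e ^ 2) by (apply pow_lt; lra).
  assert (Hy2 : e ^ 2 <= 4 * y ^ 2)
    by (replace (4 * y ^ 2) with ((2 * y) ^ 2) by ring; apply pow_incr; lra).
  unfold Rdiv. rewrite !Rabs_mult, (Rabs_right (/ (6 * y ^ 2)))
    by (apply Rle_ge; left; apply Rinv_0_lt_compat; nra).
  assert (H14 : Rabs (5 * y - a - a') <= 14 * C) by (apply Rabs_le; lra).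
  assert (Hinv : / (6 * y ^ 2) <= 4 / (6 * e ^ 2)).
  { unfold Rdiv. rewrite Rmult_comm, <- (Rinv_inv 4), <- Rinv_mult.
    apply Rinv_le_contravar; nra. }
  apply Rle_trans with (Rabs (a - a') * (14 * C) * (4 / (6 * e ^ 2))).
  - apply Rmult_le_compat; try apply Rmult_le_pos; try apply Rabs_pos;
      try (left; apply Rinv_0_lt_compat; nra); auto.
    apply Rmult_le_compat_l; [apply Rabs_pos|exact H14].
  - right. field. lra.
Qed.

Definition key_coerc : R := Sh_coerc * Rmin 1 (e / 4).
Definition key_lip : R := Sh_lip1 + Sh_lip2 + Sh_coerc.
Definition key_tol : R := Rmin (e / 2) (Sh_coerc * e / (4 * Sh_lip2)).

Lemma key_lip_ge : Sh_coerc <= key_lip /\ Sh_lip1 <= key_lip /\ Sh_lip2 <= key_lip.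
Proof. destruct Sh_consts_pos as [H1 [H2 H3]]. unfold key_lip. lra. Qed.

Lemma key_coerc_bounds :
  0 < key_coerc /\ key_coerc <= Sh_coerc /\ key_coerc <= Sh_coerc * (e / 4).
Proof.
  destruct Sh_consts_pos as [H1 [H2 H3]]. unfold key_coerc.
  pose proof (Rmin_l 1 (e / 4)). pose proof (Rmin_r 1 (e / 4)).
  assert (0 < Rmin 1 (e / 4)) by (apply Rmin_pos; lra).
  repeat split; [apply Rmult_lt_0_compat; lra| |].
  - rewrite <- (Rmult_1_r Sh_coerc) at 2. apply Rmult_le_compat_l; lra.
  - apply Rmult_le_compat_l; lra.
Qed.

Lemma key_tol_pos : 0 < key_tol.
Proof.
  destruct Sh_consts_pos as [H1 [H2 H3]]. unfold key_tol.
  apply Rmin_pos; [lra|]. apply Rdiv_lt_0_compat; nra.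
Qed.

Lemma key_tol_le : key_tol <= e / 2 /\ Sh_lip2 * key_tol <= Sh_coerc * e / 4.
Proof.
  destruct Sh_consts_pos as [H1 [H2 H3]]. unfold key_tol. split; [apply Rmin_l|].
  apply Rle_trans with (Sh_lip2 * (Sh_coerc * e / (4 * Sh_lip2))).
  - apply Rmult_le_compat_l; [lra|apply Rmin_r].
  - right. field. lra.
Qed.

Section KeyEstimate.

Variables x a a' y q : R.
Hypothesis x_range : e <= x <= C.
Hypothesis a_range : e <= a <= C.
Hypothesis a'_close : Rabs (a - a') <= key_tol.
Hypothesis q_small : Rabs q <= key_tol.
Hypothesis y_pos : 0 < y.

Let P := Rabs q + Rabs (a - a').
Let lhs (u : R) := key_coerc * trunc_sq u - key_lip * P * Rabs u - key_lip * P ^ 2.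

Let x_band : in_band x. Proof. unfold in_band; lra. Qed.
Let a_band : in_band a. Proof. unfold in_band; lra. Qed.
Let a'_band : in_band a'.
Proof.
  destruct key_tol_le as [Ht _]. apply Rabs_le_between in a'_close. unfold in_band; lra.
Qed.

Lemma Sh_cross_small : Rabs (Sh x a - Sh x a') <= Sh_coerc * e / 4.
Proof.
  destruct key_tol_le as [_ Ht]. eapply Rle_trans; [apply Sh_cross_le; auto|].
  pose proof (Rmult_le_compat_l Sh_lip2 _ _ (Rlt_le _ _ (proj2 (proj2 Sh_consts_pos))) a'_close).
  lra.
Qed.

Lemma Sh_gap_below : y < e / 2 -> Sh_coerc * e / 4 <= Sh x a - Sh y a'.
Proof.
  intros Hy. pose proof (proj1 Sh_consts_pos).
  pose proof Sh_cross_small as H1. apply Rabs_le_between in H1.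
  assert (H2 : Sh_coerc * (x - e / 2) <= Sh x a' - Sh (e / 2) a')
    by (apply Sh_slope_ge; unfold in_band in *; lra).
  assert (H3 : Sh y a' <= Sh (e / 2) a') by (apply Sh_mono; lra).
  assert (Sh_coerc * (e / 2) <= Sh_coerc * (x - e / 2)) by (apply Rmult_le_compat_l; lra).
  lra.
Qed.

Lemma Sh_gap_above : 2 * C < y -> Sh x a - Sh y a' <= - (Sh_coerc * C / 2).
Proof.
  intros Hy. pose proof (proj1 Sh_consts_pos).
  pose proof Sh_cross_small as H1. apply Rabs_le_between in H1.
  assert (H2 : Sh_coerc * (2 * C - x) <= Sh (2 * C) a' - Sh x a')
    by (apply Sh_slope_ge; unfold in_band in *; lra).
  assert (H3 : Sh (2 * C) a' <= Sh y a') by (apply Sh_mono; lra).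
  assert (Sh_coerc * C <= Sh_coerc * (2 * C - x)) by (apply Rmult_le_compat_l; lra).
  assert (Sh_coerc * e <= Sh_coerc * C) by (apply Rmult_le_compat_l; lra).
  assert (0 < Sh_coerc * e) by (apply Rmult_lt_0_compat; lra).
  lra.
Qed.

Lemma key_far (u G l : R) :
  e / 2 <= l -> l <= Rabs u -> Rabs q <= l -> Sh_coerc / 2 * l <= Rabs G -> 0 <= u * G ->
  lhs u <= (u - q) * G.
Proof.
  intros Hl Hu Hql HG HuG. unfold lhs, P.
  destruct key_coerc_bounds as [Hk0 [_ Hk]]. destruct key_lip_ge as [Hc _].
  pose proof (proj1 Sh_consts_pos). pose proof (Rabs_pos q). pose proof (Rabs_pos (a - a')).
  pose proof (far_branch_le u q G (Sh_coerc / 2) l ltac:(lra) Hu Hql HG HuG) as Hfar.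
  assert (Ht : key_coerc * trunc_sq u <= Sh_coerc / 2 * l * Rabs u).
  { apply Rle_trans with (Sh_coerc * (e / 4) * Rabs u).
    - apply Rmult_le_compat; [lra|apply trunc_sq_nonneg|lra|apply Rmin_r].
    - apply Rmult_le_compat_r; [apply Rabs_pos|nra]. }
  assert (Hq : Sh_coerc / 2 * l * Rabs q <= key_lip * (Rabs q + Rabs (a - a')) * Rabs u).
  { apply Rle_trans with (key_lip * Rabs q * Rabs u); [|apply Rmult_le_compat_r; nra].
    replace (key_lip * Rabs q * Rabs u) with (key_lip * (Rabs q * Rabs u)) by ring.
    replace (Sh_coerc / 2 * l * Rabs q) with (Sh_coerc / 2 * (Rabs q * l)) by ring.
    apply Rmult_le_compat; try nra. }
  pose proof (pow2_ge_0 (Rabs q + Rabs (a - a'))).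
  assert (0 <= key_lip * (Rabs q + Rabs (a - a')) ^ 2) by (apply Rmult_le_pos; lra).
  lra.
Qed.

Lemma key_band : in_band y -> lhs (x - y) <= (x - y - q) * (Sh x a - Sh y a').
Proof.
  intros Hyb. unfold lhs, P.
  destruct key_coerc_bounds as [Hk0 [Hk _]]. destruct key_lip_ge as [_ [HL1 HL2]].
  destruct Sh_consts_pos as [Hc0 [HL10 HL20]].
  set (u := x - y). set (d := a - a').
  set (D1 := Sh x a - Sh y a). set (D2 := Sh y a - Sh y a').
  replace (Sh x a - Sh y a') with (D1 + D2) by (unfold D1, D2; ring).
  replace (x - y - q) with (u - q) by (unfold u; ring).
  assert (Hco : Sh_coerc * u ^ 2 <= D1 * u) by (apply Sh_coercive; auto).
  assert (Hl1 : Rabs D1 <= Sh_lip1 * Rabs u) by (apply Sh_lipschitz; auto).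
  assert (Hl2 : Rabs D2 <= Sh_lip2 * Rabs d) by (apply Sh_cross_le; auto).
  pose proof (mul_ge_neg_abs u D2 _ Hl2) as E1.
  pose proof (mul_ge_neg_abs (- q) D1 _ Hl1) as E2.
  pose proof (mul_ge_neg_abs (- q) D2 _ Hl2) as E3.
  rewrite Rabs_Ropp in E2, E3.
  assert (Ht : key_coerc * trunc_sq u <= Sh_coerc * u ^ 2)
    by (apply Rmult_le_compat; [lra|apply trunc_sq_nonneg|lra|apply Rmin_l]).
  pose proof (Rabs_pos u). pose proof (Rabs_pos q). pose proof (Rabs_pos d).
  assert (Hm : Rabs u * (Sh_lip2 * Rabs d) + Rabs q * (Sh_lip1 * Rabs u)
               <= key_lip * (Rabs q + Rabs d) * Rabs u).
  { assert (0 <= Rabs u * Rabs d) by nra. assert (0 <= Rabs q * Rabs u) by nra. nra. }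
  assert (Hs : Rabs q * (Sh_lip2 * Rabs d) <= key_lip * (Rabs q + Rabs d) ^ 2).
  { assert (0 <= Rabs q * Rabs d) by nra. nra. }
  replace ((u - q) * (D1 + D2)) with (D1 * u + u * D2 + - q * D1 + - q * D2) by ring.
  lra.
Qed.

Lemma Sh_key_estimate : lhs (x - y) <= (x - y - q) * (Sh x a - Sh y a').
Proof.
  destruct key_tol_le as [Ht _]. pose proof (proj1 Sh_consts_pos).
  assert (0 < Sh_coerc * e) by (apply Rmult_lt_0_compat; lra).
  assert (0 < Sh_coerc * C) by (apply Rmult_lt_0_compat; lra).
  destruct (Rlt_le_dec y (e / 2)) as [Ylo|Ylo]; [|destruct (Rle_lt_dec y (2 * C)) as [Yhi|Yhi]].
  - pose proof (Sh_gap_below Ylo) as G.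
    apply (key_far (x - y) _ (e / 2)); try lra.
    + rewrite Rabs_right; lra.
    + rewrite Rabs_right; lra.
    + apply Rmult_le_pos; lra.
  - apply key_band. unfold in_band; lra.
  - pose proof (Sh_gap_above Yhi) as G.
    apply (key_far (x - y) _ C); try lra.
    + rewrite Rabs_left; lra.
    + rewrite Rabs_left; lra.
    + nra.
Qed.

End KeyEstimate.

End EntropyIncrement.

Section TruncatedEnergy.

Variables (h : R) (N : nat).
Hypothesis h_pos : 0 < h.

Definition trunc_mass (f : grid) : R := h ^ 3 * sum3 N (fun i j k => trunc_sq (f i j k)).

Lemma trunc_mass_nonneg (f : grid) : 0 <= trunc_mass f.
Proof.
  apply Rmult_le_pos; [apply pow_le; lra|].
  apply sum3_nonneg; intros i j k _ _ _; apply trunc_sq_nonneg.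
Qed.

(* Cellwise f^2 <= trunc_sq f + trunc_sq f ^ 2, and one cell carries at most the whole mass. *)
Lemma norm2_sq_le_trunc_mass (f : grid) :
  norm2 h N f ^ 2 <= trunc_mass f + trunc_mass f ^ 2 / h ^ 3.
Proof.
  set (M := trunc_mass f).
  assert (Hh3 : 0 < h ^ 3) by (apply pow_lt; lra).
  assert (Hcell : on_cells N (fun i j k => trunc_sq (f i j k) <= M / h ^ 3)).
  { intros i j k Hi Hj Hk. apply Rmult_le_reg_l with (h ^ 3); [exact Hh3|].
    replace (h ^ 3 * (M / h ^ 3)) with M by (field; lra).
    apply Rmult_le_compat_l; [lra|].
    apply (sum3_ge_term N (fun i j k => trunc_sq (f i j k))); auto.
    intros a b c _ _ _; apply trunc_sq_nonneg. }
  rewrite norm2_sq by exact h_pos. unfold ip.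
  apply Rle_trans
    with (h ^ 3 * sum3 N (fun i j k => trunc_sq (f i j k) + M / h ^ 3 * trunc_sq (f i j k))).
  - apply Rmult_le_compat_l; [lra|]. apply sum3_le; intros i j k Hi Hj Hk.
    pose proof (sq_le_trunc_sq (f i j k)). pose proof (trunc_sq_nonneg (f i j k)).
    pose proof (Rmult_le_compat_r (trunc_sq (f i j k)) _ _ ltac:(lra) (Hcell i j k Hi Hj Hk)).
    simpl in *. lra.
  - rewrite sum3_plus, sum3_scal, Rmult_plus_distr_l. fold M. right. unfold M, trunc_mass. field. lra.
Qed.

Lemma ip_ge_of_pointwise (cc L : R) (e q P G : grid) : 0 <= L ->
  on_cells N (fun i j k => 0 <= P i j k) ->
  on_cells N (fun i j k => cc * trunc_sq (e i j k) - L * P i j k * Rabs (e i j k) - L * P i j k ^ 2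
                           <= (e i j k - q i j k) * G i j k) ->
  cc * trunc_mass e - L * norm2 h N P * norm2 h N e - L * norm2 h N P ^ 2
    <= ip h N (fun i j k => e i j k - q i j k) G.
Proof.
  intros HL HP Hpt. unfold trunc_mass.
  assert (Hsum : h ^ 3 * sum3 N (fun i j k => cc * trunc_sq (e i j k) - L * (P i j k * Rabs (e i j k))
                                            - L * (P i j k * P i j k))
                 <= ip h N (fun i j k => e i j k - q i j k) G).
  { unfold ip. apply Rmult_le_compat_l; [apply pow_le; lra|]. apply sum3_le; intros i j k Hi Hj Hk.
    specialize (Hpt i j k Hi Hj Hk). simpl in Hpt. lra. }
  rewrite !sum3_minus, !sum3_scal in Hsum.
  assert (HPe : h ^ 3 * sum3 N (fun i j k => P i j k * Rabs (e i j k)) <= norm2 h N P * norm2 h N e)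
    by (rewrite <- (norm2_abs h N e); apply (ip_le_norm2 h N h_pos P (fun i j k => Rabs (e i j k)))).
  assert (HPP : h ^ 3 * sum3 N (fun i j k => P i j k * P i j k) = norm2 h N P ^ 2)
    by (rewrite norm2_sq; auto).
  pose proof (Rmult_le_compat_l L _ _ HL HPe). nra.
Qed.

End TruncatedEnergy.

(** * Scalar estimates *)

Lemma le_sqrt_sq_plus (x d : R) : 0 <= d -> x <= sqrt (x ^ 2 + d).
Proof.
  intros Hd. destruct (Rle_dec x 0) as [|Hx]; [pose proof (sqrt_pos (x ^ 2 + d)); lra|].
  rewrite <- (sqrt_pow2 x) at 1 by lra. apply sqrt_le_1_alt. lra.
Qed.

(* sqrt (x^2 + d^2) is within d of |x|, and |x| is at least as close to b >= 0 as x is. *)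
Lemma sq_sub_sqrt_le (b x d : R) : 0 <= b -> 0 <= d ->
  (b - sqrt (x ^ 2 + d ^ 2)) ^ 2 <= 2 * (b - x) ^ 2 + 2 * d ^ 2.
Proof.
  intros Hb Hd. set (r := sqrt (x ^ 2 + d ^ 2)).
  assert (H1 : Rabs x <= r).
  { unfold r. rewrite <- (sqrt_pow2 (Rabs x)) by apply Rabs_pos. apply sqrt_le_1_alt.
    rewrite pow2_abs. pose proof (pow2_ge_0 d). lra. }
  assert (H2 : r <= Rabs x + d).
  { unfold r. rewrite <- (sqrt_pow2 (Rabs x + d)) by (pose proof (Rabs_pos x); lra).
    apply sqrt_le_1_alt. rewrite <- (pow2_abs x). pose proof (Rabs_pos x). nra. }
  assert (H3 : Rabs (b - r) <= Rabs (b - x) + d).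
  { replace (b - r) with ((b - Rabs x) + (Rabs x - r)) by ring.
    eapply Rle_trans; [apply Rabs_triang|].
    assert (Rabs (Rabs x - b) <= Rabs (x - b))
      by (rewrite <- (Rabs_right b) at 1 by lra; apply Rabs_triang_inv2).
    rewrite (Rabs_minus_sym b (Rabs x)), (Rabs_minus_sym b x), (Rabs_left1 (Rabs x - r)) by lra.
    lra. }
  assert (H4 : (b - r) ^ 2 <= (Rabs (b - x) + d) ^ 2).
  { rewrite <- (pow2_abs (b - r)). apply pow_incr. split; [apply Rabs_pos|exact H3]. }
  pose proof (pow2_ge_0 (Rabs (b - x) - d)).
  rewrite <- (pow2_abs (b - x)). nra.
Qed.

Lemma pow_le_one (x : R) (n : nat) : 0 <= x <= 1 -> x ^ n <= 1.
Proof. intros Hx. rewrite <- (pow1 n). apply pow_incr; lra. Qed.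

Lemma le_sqrt_self (h : R) : 0 <= h <= 1 -> h <= sqrt h.
Proof.
  intros Hh. pose proof (sqrt_pos h). assert (sqrt h * sqrt h = h) by (apply sqrt_sqrt; lra).
  assert (sqrt h <= 1) by (rewrite <- sqrt_1; apply sqrt_le_1_alt; lra). nra.
Qed.

Lemma sq_pow3_sqrt (h : R) : 0 <= h -> (h ^ 3 * sqrt h) ^ 2 = h ^ 7.
Proof.
  intros Hh. replace ((h ^ 3 * sqrt h) ^ 2) with (h ^ 6 * (sqrt h * sqrt h)) by ring.
  rewrite sqrt_sqrt by lra. ring.
Qed.

Lemma Rpower_15_4_le (h : R) : 0 < h <= 1 -> Rpower h (15 / 4) <= h ^ 3 * sqrt h.
Proof.
  intros Hh. replace (15 / 4) with (INR 3 + 3 / 4) by (simpl; lra).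
  rewrite Rpower_plus, Rpower_pow by lra. apply Rmult_le_compat_l; [apply pow_le; lra|].
  rewrite <- Rpower_sqrt by lra. unfold Rpower.
  assert (ln h <= 0) by (rewrite <- ln_1; apply ln_le; lra).
  destruct (Rle_lt_or_eq_dec _ _ H) as [Hl|He].
  - left. apply exp_increasing. nra.
  - rewrite He. right. f_equal; ring.
Qed.

Lemma Rpower_15_4_sum_le (h dt lam : R) : 0 < h <= 1 -> 0 < dt -> 0 < lam -> dt <= lam * h ->
  Rpower dt (15 / 4) + Rpower h (15 / 4) <= (Rpower lam (15 / 4) + 1) * (h ^ 3 * sqrt h).
Proof.
  intros Hh Hdt Hl Hdth. pose proof (Rpower_15_4_le h Hh).
  assert (Rpower dt (15 / 4) <= Rpower lam (15 / 4) * Rpower h (15 / 4))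
    by (rewrite Rpower_mult_distr by lra; apply Rle_Rpower_l; lra).
  assert (0 < Rpower lam (15 / 4)) by apply exp_pos.
  pose proof (Rmult_le_compat_l (Rpower lam (15 / 4)) _ _ (Rlt_le _ _ H1) H). lra.
Qed.

Lemma pow4_sum_le (h dt lam : R) : 0 < h <= 1 -> 0 < dt -> 0 < lam -> dt <= lam * h ->
  dt ^ 4 + h ^ 4 <= (lam ^ 4 + 1) * (h ^ 3 * sqrt h).
Proof.
  intros Hh Hdt Hl Hdth.
  assert (dt ^ 4 <= lam ^ 4 * h ^ 4) by (rewrite <- Rpow_mult_distr; apply pow_incr; lra).
  assert (h ^ 4 <= h ^ 3 * sqrt h).
  { replace (h ^ 4) with (h ^ 3 * h) by ring.
    apply Rmult_le_compat_l; [apply pow_le; lra|apply le_sqrt_self; lra]. }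
  assert (0 < lam ^ 4) by (apply pow_lt; lra).
  pose proof (Rmult_le_compat_l (lam ^ 4) _ _ (Rlt_le _ _ H1) H0). lra.
Qed.

(* Inverse estimate: an l^2 bound of order h^(7/2) gives a pointwise bound of order h^2. *)
Lemma div_h_sqrt_le (h X K : R) :
  0 < h -> X <= K * (h ^ 3 * sqrt h) -> X / (h * sqrt h) <= K * h ^ 2.
Proof.
  intros Hh HX. assert (0 < sqrt h) by (apply sqrt_lt_R0; lra).
  apply Rmult_le_reg_r with (h * sqrt h); [apply Rmult_lt_0_compat; lra|].
  replace (X / (h * sqrt h) * (h * sqrt h)) with X by (field; lra).
  replace (K * h ^ 2 * (h * sqrt h)) with (K * (h ^ 3 * sqrt h)) by ring. exact HX.
Qed.

Lemma energy_closure (gam cc L chi theta dt E M R0 F0 Q PP T S X K KX Kk Kc z : R) :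
  0 < gam -> 0 <= L -> 0 < chi -> 0 < theta -> 0 < dt -> 0 <= E -> 0 <= Q -> 0 <= R0 ->
  0 <= K -> 0 < z ->
  gam * (cc * M - L * PP * E - L * PP ^ 2)
    <= X + chi / 2 * ((E + Q) * S)
       - chi ^ 2 * dt / (4 * theta) * (E ^ 2 - E * R0 - Q * E - Q * R0) ->
  S <= 2 * F0 + dt / theta * (chi / 2 * (E + R0) + T) ->
  0 <= PP <= K * z -> 0 <= F0 <= K * z -> R0 <= K * z -> Q <= K * z -> 0 <= T <= K * z ->
  X <= KX * z ^ 2 -> chi ^ 2 * dt / (4 * theta) <= Kk -> chi * dt / (2 * theta) <= Kc ->
  gam * cc * M <= (gam * L * K + chi * K + 4 * Kk * K + Kc * K) * z * E
     + (gam * L * K ^ 2 + KX + chi * K ^ 2 + 2 * Kk * K ^ 2 + Kc * K ^ 2) * z ^ 2.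
Proof.
  intros Hg HL Hchi Hth Hdt HE HQ HR0 HK Hz HI HS HPP HF0 HR0z HQz HT HX Hkap Hcp.
  set (kap := chi ^ 2 * dt / (4 * theta)) in *. set (cp := chi * dt / (2 * theta)) in *.
  assert (Hkap0 : 0 <= kap) by (apply Rle_mult_inv_pos; nra).
  assert (Hcp0 : 0 <= cp) by (apply Rle_mult_inv_pos; nra).
  assert (HKz : 0 <= K * z) by (apply Rmult_le_pos; lra).
  (* the phi-coupling contributes kap * E^2, which cancels against the kap-term *)
  assert (Hcoup : chi / 2 * ((E + Q) * S)
                  <= chi * (E + Q) * F0 + kap * (E + Q) * (E + R0) + cp * (E + Q) * T).
  { replace (chi * (E + Q) * F0 + kap * (E + Q) * (E + R0) + cp * (E + Q) * T)
      with (chi / 2 * ((E + Q) * (2 * F0 + dt / theta * (chi / 2 * (E + R0) + T))))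
      by (unfold kap, cp; field; lra).
    apply Rmult_le_compat_l; [lra|]. apply Rmult_le_compat_l; lra. }
  assert (B1 : gam * L * PP * E <= gam * L * (K * z) * E).
  { apply Rmult_le_compat_r; [lra|]. apply Rmult_le_compat_l; [apply Rmult_le_pos|]; lra. }
  assert (B2 : gam * L * PP ^ 2 <= gam * L * (K * z) ^ 2).
  { apply Rmult_le_compat_l; [apply Rmult_le_pos; lra|]. apply pow_incr; lra. }
  assert (B3 : chi * (E + Q) * F0 <= chi * (E + K * z) * (K * z)).
  { apply Rmult_le_compat; try lra; [apply Rmult_le_pos; lra|]. apply Rmult_le_compat_l; lra. }
  assert (B4 : kap * (E * R0 + Q * E + Q * R0) <= Kk * (2 * (E * (K * z)) + (K * z) * (K * z))).
  { apply Rmult_le_compat; auto.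
    - assert (0 <= E * R0) by nra. assert (0 <= Q * E) by nra. assert (0 <= Q * R0) by nra. lra.
    - assert (E * R0 <= E * (K * z)) by (apply Rmult_le_compat_l; lra).
      assert (Q * E <= (K * z) * E) by (apply Rmult_le_compat_r; lra).
      assert (Q * R0 <= (K * z) * (K * z)) by (apply Rmult_le_compat; lra). lra. }
  assert (B5 : cp * (E + Q) * T <= Kc * (E + K * z) * (K * z)).
  { apply Rmult_le_compat; try lra; [apply Rmult_le_pos; lra|]. apply Rmult_le_compat; lra. }
  assert (HgM : gam * cc * M <= gam * L * PP * E + gam * L * PP ^ 2 + X + chi * (E + Q) * F0
                               + 2 * kap * (E * R0 + Q * E + Q * R0) + cp * (E + Q) * T).
  { assert (kap * (E + Q) * (E + R0) - kap * (E ^ 2 - E * R0 - Q * E - Q * R0)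
            = 2 * kap * (E * R0 + Q * E + Q * R0)) by ring.
    lra. }
  apply Rle_trans with (gam * L * (K * z) * E + gam * L * (K * z) ^ 2 + KX * z ^ 2
     + chi * (E + K * z) * (K * z) + 2 * (Kk * (2 * (E * (K * z)) + (K * z) * (K * z)))
     + Kc * (E + K * z) * (K * z)); [lra|].
  right. ring.
Qed.

Lemma error_le_of_energy (h z g E M A1 A0 : R) :
  0 < h <= 1 -> 0 < z -> z ^ 2 = h ^ 7 -> 0 < g -> 0 <= E -> 0 <= M -> 0 <= A1 -> 0 <= A0 ->
  g * M <= A1 * z * E + A0 * z ^ 2 ->
  E ^ 2 <= M + M ^ 2 / h ^ 3 ->
  8 * (A1 / g) ^ 2 * h <= 1 ->
  2 * ((A1 / g) ^ 2 + A0 / g + 2 * (A0 / g) ^ 2) * h <= 1 ->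
  E <= h ^ 3.
Proof.
  intros Hh Hz Hz2 Hg HE HM HA1 HA0 HgM HEM C1 C2.
  set (a1 := A1 / g) in *. set (a0 := A0 / g) in *.
  assert (Ha1 : 0 <= a1) by (apply Rle_mult_inv_pos; lra).
  assert (Ha0 : 0 <= a0) by (apply Rle_mult_inv_pos; lra).
  assert (Hh3 : 0 < h ^ 3) by (apply pow_lt; lra).
  assert (HM1 : M <= a1 * z * E + a0 * z ^ 2).
  { apply Rmult_le_reg_l with g; [lra|]. unfold a1, a0.
    replace (g * (A1 / g * z * E + A0 / g * z ^ 2)) with (A1 * z * E + A0 * z ^ 2) by (field; lra).
    exact HgM. }
  assert (HMlin : M <= E ^ 2 / 4 + (a1 ^ 2 + a0) * h ^ 7).
  { rewrite <- Hz2. pose proof (pow2_ge_0 (E / 2 - a1 * z)). nra. }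
  assert (HMsq : M ^ 2 / h ^ 3 <= 2 * a1 ^ 2 * h * E ^ 2 + 2 * a0 ^ 2 * h ^ 7).
  { assert (HM2 : M ^ 2 <= 2 * a1 ^ 2 * h ^ 7 * E ^ 2 + 2 * a0 ^ 2 * h ^ 14).
    { assert (0 <= a1 * z * E) by (apply Rmult_le_pos; [apply Rmult_le_pos|]; lra).
      assert (M ^ 2 <= (a1 * z * E + a0 * z ^ 2) ^ 2) by (apply pow_incr; lra).
      pose proof (pow2_ge_0 (a1 * z * E - a0 * z ^ 2)).
      replace (h ^ 14) with ((z ^ 2) ^ 2) by (rewrite Hz2; ring). rewrite <- Hz2. nra. }
    apply Rmult_le_reg_r with (h ^ 3); [exact Hh3|].
    replace (M ^ 2 / h ^ 3 * h ^ 3) with (M ^ 2) by (field; lra).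
    assert (H74 : h ^ 7 <= h ^ 4).
    { replace (h ^ 7) with (h ^ 4 * h ^ 3) by ring. pose proof (pow_le_one h 3 ltac:(lra)).
      pose proof (pow_lt h 4 ltac:(lra)). nra. }
    assert (H1410 : h ^ 14 <= h ^ 10).
    { replace (h ^ 14) with (h ^ 10 * h ^ 4) by ring. pose proof (pow_le_one h 4 ltac:(lra)).
      pose proof (pow_lt h 10 ltac:(lra)). nra. }
    pose proof (Rmult_le_compat_l (2 * (a1 * E) ^ 2) _ _
                  ltac:(pose proof (pow2_ge_0 (a1 * E)); lra) H74).
    pose proof (Rmult_le_compat_l (2 * a0 ^ 2) _ _ ltac:(pose proof (pow2_ge_0 a0); lra) H1410).
    replace ((2 * a1 ^ 2 * h * E ^ 2 + 2 * a0 ^ 2 * h ^ 7) * h ^ 3)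
      with (2 * (a1 * E) ^ 2 * h ^ 4 + 2 * a0 ^ 2 * h ^ 10) by ring.
    replace (2 * a1 ^ 2 * h ^ 7 * E ^ 2) with (2 * (a1 * E) ^ 2 * h ^ 7) in HM2 by ring.
    lra. }
  assert (HE6 : E ^ 2 <= h ^ 6).
  { assert (2 * a1 ^ 2 * h * E ^ 2 <= E ^ 2 / 4) by (pose proof (pow2_ge_0 E); nra).
    assert (HE2 : E ^ 2 <= 2 * (a1 ^ 2 + a0 + 2 * a0 ^ 2) * h * h ^ 6)
      by (replace (h ^ 7) with (h * h ^ 6) in * by ring; nra).
    pose proof (pow_lt h 6 ltac:(lra)). nra. }
  apply Rsqr_incr_0_var; [|apply pow_le; lra]. rewrite !Rsqr_pow2.
  replace ((h ^ 3) ^ 2) with (h ^ 6) by ring. exact HE6.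
Qed.

(** * One step of the error analysis *)

Lemma mul_le_of_le_div_succ (X Y h : R) : 0 <= X -> 0 < h -> h <= Y / (X + 1) -> X * h <= Y.
Proof.
  intros HX Hh H. apply Rmult_le_compat_l with (r := X + 1) in H; [|lra].
  replace ((X + 1) * (Y / (X + 1))) with Y in H by (field; lra). nra.
Qed.

Section ErrorStep.

Variables gamma mu alpha chi theta epsS CS Ctau lam2 L : R.
Hypothesis gamma_pos : 0 < gamma.
Hypothesis mu_pos : 0 < mu.
Hypothesis alpha_pos : 0 < alpha.
Hypothesis chi_pos : 0 < chi.
Hypothesis theta_pos : 0 < theta.
Hypothesis epsS_pos : 0 < epsS.
Hypothesis CS_pos : 0 < CS.
Hypothesis Ctau_pos : 0 < Ctau.
Hypothesis lam2_pos : 0 < lam2.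
Hypothesis L_pos : 0 < L.

(* Each K_ bounds an error norm by K_ * h^(7/2) (given dt <= lam2 h); energy_A1 and energy_A0 are
   the coefficients of the closed energy inequality
   energy_lhs * M <= energy_A1 * h^(7/2) * |e| + energy_A0 * h^7. *)
Definition K_apriori : R := Rpower lam2 (15 / 4) + 1.
Definition K_trunc : R := Ctau * (lam2 ^ 4 + 1).
Definition K_q : R := K_apriori + lam2 * K_trunc.
Definition K_all : R := K_q + K_apriori + K_trunc.
Definition K_flux : R :=
  lam2 * (6 * (CS ^ 2 / (4 * (epsS / 2)))) * (10 * K_apriori ^ 2 + 2 * lam2 ^ 8 * L ^ 3).
Definition K_kap : R := chi ^ 2 * lam2 / (4 * theta).
Definition K_cp : R := chi * lam2 / (2 * theta).
Definition energy_lhs : R := gamma * key_coerc epsS CS.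
Definition energy_A1 : R :=
  gamma * key_lip epsS CS * K_all + chi * K_all + 4 * K_kap * K_all + K_cp * K_all.
Definition energy_A0 : R :=
  gamma * key_lip epsS CS * K_all ^ 2 + K_flux + chi * K_all ^ 2 + 2 * K_kap * K_all ^ 2
  + K_cp * K_all ^ 2.
Definition closure_const : R :=
  (energy_A1 / energy_lhs) ^ 2 + energy_A0 / energy_lhs + 2 * (energy_A0 / energy_lhs) ^ 2.
Definition step_h0 : R :=
  Rmin (Rmin 1 (1 / (8 * (energy_A1 / energy_lhs) ^ 2 + 1)))
       (Rmin (1 / (2 * closure_const + 1))
             (Rmin (key_tol epsS CS / (K_q + K_apriori + 1))
                   (epsS / (CS * lam2 + 4 * K_apriori + 1)))).

Lemma step_consts_pos :
  1 <= K_apriori /\ 0 < K_trunc /\ 0 < K_q /\ 0 <= K_flux /\ 0 <= K_kap /\ 0 <= K_cp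
  /\ 0 < energy_lhs /\ 0 <= energy_A1 /\ 0 <= energy_A0.
Proof.
  assert (Ha : 1 <= K_apriori)
    by (unfold K_apriori; pose proof (exp_pos (15 / 4 * ln lam2)); unfold Rpower; lra).
  assert (Ht : 0 < K_trunc) by (unfold K_trunc; pose proof (pow_lt lam2 4 lam2_pos); nra).
  assert (Hq : 0 < K_q) by (unfold K_q; pose proof (Rmult_lt_0_compat _ _ lam2_pos Ht); lra).
  assert (Hall : 0 < K_all) by (unfold K_all; lra).
  assert (Hf : 0 <= K_flux).
  { unfold K_flux. pose proof (pow_le lam2 8 ltac:(lra)). pose proof (pow_le L 3 ltac:(lra)).
    pose proof (pow2_ge_0 K_apriori). pose proof (pow2_ge_0 CS).
    assert (0 <= CS ^ 2 / (4 * (epsS / 2))) by (apply Rle_mult_inv_pos; lra).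
    assert (0 <= lam2 ^ 8 * L ^ 3) by nra. apply Rmult_le_pos; [nra|lra]. }
  assert (Hk : 0 <= K_kap) by (unfold K_kap; apply Rle_mult_inv_pos; nra).
  assert (Hc : 0 <= K_cp) by (unfold K_cp; apply Rle_mult_inv_pos; nra).
  destruct (key_coerc_bounds epsS CS epsS_pos CS_pos) as [Hg _].
  pose proof (key_lip_ge epsS CS epsS_pos CS_pos) as [Hl _].
  pose proof (proj1 (Sh_consts_pos epsS CS epsS_pos CS_pos)).
  pose proof (pow2_ge_0 K_all).
  repeat split; auto.
  - unfold energy_lhs. apply Rmult_lt_0_compat; lra.
  - unfold energy_A1. assert (0 <= gamma * key_lip epsS CS) by nra. nra.
  - unfold energy_A0. assert (0 <= gamma * key_lip epsS CS) by nra. nra.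
Qed.

Lemma closure_const_nonneg : 0 <= closure_const.
Proof.
  destruct step_consts_pos as [_ [_ [_ [_ [_ [_ [Hg [_ HA0]]]]]]]]. unfold closure_const.
  pose proof (pow2_ge_0 (energy_A1 / energy_lhs)). pose proof (pow2_ge_0 (energy_A0 / energy_lhs)).
  assert (0 <= energy_A0 / energy_lhs) by (apply Rle_mult_inv_pos; lra). lra.
Qed.

Lemma step_h0_pos : 0 < step_h0.
Proof.
  destruct step_consts_pos as [Ha [_ [Hq _]]]. pose proof closure_const_nonneg.
  pose proof (key_tol_pos epsS CS epsS_pos CS_pos). pose proof (pow2_ge_0 (energy_A1 / energy_lhs)).
  unfold step_h0. repeat apply Rmin_pos; try lra; apply Rdiv_lt_0_compat; nra.
Qed.

Lemma le_Rmin_split (x a b : R) : x <= Rmin a b -> x <= a /\ x <= b.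
Proof. intros H. pose proof (Rmin_l a b). pose proof (Rmin_r a b). lra. Qed.

Lemma step_h0_spec (h : R) : 0 < h -> h <= step_h0 ->
  h <= 1 /\ 8 * (energy_A1 / energy_lhs) ^ 2 * h <= 1 /\ 2 * closure_const * h <= 1
  /\ (K_q + K_apriori) * h <= key_tol epsS CS /\ (CS * lam2 + 4 * K_apriori) * h <= epsS.
Proof.
  intros Hh Hh0. unfold step_h0 in Hh0.
  apply le_Rmin_split in Hh0 as [H12 H345]. apply le_Rmin_split in H12 as [H1 H2].
  apply le_Rmin_split in H345 as [H3 H45]. apply le_Rmin_split in H45 as [H4 H5].
  destruct step_consts_pos as [Ha [_ [Hq _]]]. pose proof closure_const_nonneg.
  pose proof (pow2_ge_0 (energy_A1 / energy_lhs)).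
  pose proof (Rmult_le_pos _ _ (Rlt_le _ _ CS_pos) (Rlt_le _ _ lam2_pos)).
  repeat split; [lra| | | |]; apply mul_le_of_le_div_succ; auto; lra.
Qed.

Variables (h dt : R) (N n : nat) (rho phi rc pc : nat -> grid) (taur tauf : grid).
Hypothesis N_pos : (1 <= N)%nat.
Hypothesis h_pos : 0 < h.
Hypothesis h_N : h * INR N = L.
Hypothesis dt_pos : 0 < dt.
Hypothesis dt_le : dt <= lam2 * h.
Hypothesis h_small : h <= step_h0.
Hypothesis scheme : scheme_step gamma mu alpha chi theta dt h N rho phi n.
Hypothesis rho_pos : on_cells N (fun i j k => 0 < rho (S n) i j k).
Hypothesis perturbed : perturbed_step gamma mu alpha chi theta dt h N rc pc taur tauf n.
Hypothesis taur_small : norm2 h N taur <= Ctau * (dt ^ 4 + h ^ 4).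
Hypothesis tauf_small : norm2 h N tauf <= Ctau * (dt ^ 4 + h ^ 4).
Hypothesis rc_n_range : on_cells N (fun i j k => epsS <= rc n i j k <= CS).
Hypothesis rc_Sn_range : on_cells N (fun i j k => epsS <= rc (S n) i j k <= CS).
Hypothesis rc_increment : norminf N (gsub (rc n) (rc (pred n))) <= CS * dt.
Hypothesis potential_grad :
  gradinf h N (potential gamma chi theta dt (rc (S n)) (rc n) (pc (S n)) (pc n)) <= CS.
Hypothesis apriori_n :
  norm2 h N (gsub (rc n) (rho n)) <= Rpower dt (15 / 4) + Rpower h (15 / 4) /\
  norm2 h N (gsub (pc n) (phi n)) <= Rpower dt (15 / 4) + Rpower h (15 / 4).
Hypothesis apriori_pred :
  norm2 h N (gsub (rc (pred n)) (rho (pred n))) <= Rpower dt (15 / 4) + Rpower h (15 / 4).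

Let z := h ^ 3 * sqrt h.
Let e := gsub (rc (S n)) (rho (S n)).
Let r0 := gsub (rc n) (rho n).
Let r1 := gsub (rc (pred n)) (rho (pred n)).
Let f0 := gsub (pc n) (phi n).
Let s : grid := fun i j k => (pc (S n) i j k - phi (S n) i j k) + (pc n i j k - phi n i j k).
Let q : grid := fun i j k => r0 i j k + dt * taur i j k.
Let pert : grid := fun i j k => Rabs (q i j k) + Rabs (r0 i j k).
Let mob_check : grid := fun i j k => 3 / 2 * rc n i j k - 1 / 2 * rc (pred n) i j k.
Let mob_hat := rhohat dt (rho n) (rho (pred n)).
Let Vc := potential gamma chi theta dt (rc (S n)) (rc n) (pc (S n)) (pc n).
Let V := potential gamma chi theta dt (rho (S n)) (rho n) (phi (S n)) (phi n).
Let dS : grid := fun i j k => Sh (rc (S n) i j k) (rc n i j k) - Sh (rho (S n) i j k) (rho n i j k).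
Let incr : grid := fun i j k => e i j k - q i j k.

Let small := step_h0_spec h h_pos h_small.
Let consts := step_consts_pos.
Let dt_le_lam2 : dt <= lam2. Proof. destruct small as [Hh1 _]. nra. Qed.

Lemma z_facts : 0 < z /\ z ^ 2 = h ^ 7.
Proof.
  split; [|apply sq_pow3_sqrt; lra].
  apply Rmult_lt_0_compat; [apply pow_lt; lra|apply sqrt_lt_R0; lra].
Qed.

Lemma apriori_le :
  norm2 h N r0 <= K_apriori * z /\ norm2 h N r1 <= K_apriori * z /\ norm2 h N f0 <= K_apriori * z.
Proof.
  pose proof (Rpower_15_4_sum_le h dt lam2 ltac:(destruct small; lra) dt_pos lam2_pos dt_le).
  pose proof apriori_pred. destruct apriori_n. unfold r0, r1, f0, z, K_apriori. repeat split; lra.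
Qed.

Lemma truncation_le : norm2 h N taur <= K_trunc * z /\ norm2 h N tauf <= K_trunc * z.
Proof.
  pose proof (pow4_sum_le h dt lam2 ltac:(destruct small; lra) dt_pos lam2_pos dt_le).
  pose proof (Rmult_le_compat_l Ctau _ _ (Rlt_le _ _ Ctau_pos) H).
  unfold z, K_trunc. split; lra.
Qed.

Lemma q_le : norm2 h N q <= K_q * z.
Proof.
  destruct apriori_le as [Hr0 _]. destruct truncation_le as [Htr _].
  destruct small as [Hh1 _]. destruct z_facts as [Hz _].
  eapply Rle_trans; [apply norm2_triangle; exact h_pos|].
  rewrite norm2_scal, Rabs_right by lra.
  pose proof (norm2_nonneg h N taur).
  assert (dt * norm2 h N taur <= lam2 * (K_trunc * z)) by (apply Rmult_le_compat; lra).
  unfold K_q. lra.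
Qed.

Lemma pert_le : norm2 h N pert <= (K_q + K_apriori) * z.
Proof.
  eapply Rle_trans; [apply norm2_triangle; exact h_pos|].
  rewrite !norm2_abs. pose proof q_le. pose proof (proj1 apriori_le). lra.
Qed.

Lemma pointwise_of_norm2 (f : grid) (K : R) : 0 <= K -> norm2 h N f <= K * z ->
  on_cells N (fun i j k => Rabs (f i j k) <= K * h ^ 2).
Proof.
  intros HK Hf i j k Hi Hj Hk.
  eapply Rle_trans; [exact (pt_abs_le_norm2 h N h_pos f i j k Hi Hj Hk)|].
  apply div_h_sqrt_le; auto.
Qed.

Lemma errors_pointwise : on_cells N (fun i j k =>
  Rabs (r0 i j k) <= K_apriori * h ^ 2 /\ Rabs (r1 i j k) <= K_apriori * h ^ 2
  /\ Rabs (q i j k) <= key_tol epsS CS /\ Rabs (r0 i j k) <= key_tol epsS CS).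
Proof.
  intros i j k Hi Hj Hk.
  destruct consts as [Ha [_ [Hq _]]]. destruct apriori_le as [Hr0 [Hr1 _]].
  destruct small as [Hh1 [_ [_ [Htol _]]]].
  pose proof (pointwise_of_norm2 r0 K_apriori ltac:(lra) Hr0 i j k Hi Hj Hk).
  pose proof (pointwise_of_norm2 r1 K_apriori ltac:(lra) Hr1 i j k Hi Hj Hk).
  pose proof (pointwise_of_norm2 q K_q ltac:(lra) q_le i j k Hi Hj Hk).
  assert (Hh2 : h ^ 2 <= h) by (simpl; nra).
  pose proof (Rmult_le_compat_l K_apriori _ _ ltac:(lra) Hh2).
  pose proof (Rmult_le_compat_l K_q _ _ ltac:(lra) Hh2).
  assert (0 <= K_apriori * h) by (apply Rmult_le_pos; lra).
  assert (0 <= K_q * h) by (apply Rmult_le_pos; lra).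
  repeat split; lra.
Qed.

Lemma phi_error_le : norm2 h N s <= 2 * norm2 h N f0
  + dt / theta * (chi / 2 * (norm2 h N e + norm2 h N r0) + norm2 h N tauf).
Proof.
  destruct scheme as [_ Hsp]. destruct perturbed as [_ Hpp].
  assert (Hw : norm2 h N (fun i j k => e i j k + r0 i j k) <= norm2 h N e + norm2 h N r0)
    by (apply norm2_triangle; exact h_pos).
  eapply Rle_trans.
  - apply (phi_error_energy h N dt theta mu alpha chi s f0 (fun i j k => e i j k + r0 i j k)
             tauf); auto.
    intros i j k Hi Hj Hk.
    replace (theta * (s i j k - 2 * f0 i j k) / dt)
      with (theta * (pc (S n) i j k - pc n i j k) / dt
            - theta * (phi (S n) i j k - phi n i j k) / dt)
      by (unfold s, f0, gsub; field; lra).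
    rewrite (Hpp i j k Hi Hj Hk), (Hsp i j k Hi Hj Hk).
    unfold s, e, r0, gsub, lap, dx, dy, dz, Dx, Dy, Dz, ext. field. lra.
  - assert (0 <= dt / theta * (chi / 2)) by (apply Rmult_le_pos; [apply Rle_mult_inv_pos|]; lra).
    pose proof (Rmult_le_compat_l _ _ _ H Hw). nra.
Qed.

Lemma rho_error_eq : on_cells N (fun i j k =>
  incr i j k = dt * (divDgrad h N mob_check Vc i j k - divDgrad h N mob_hat V i j k)).
Proof.
  destruct scheme as [Hsr _]. destruct perturbed as [Hpr _]. intros i j k Hi Hj Hk.
  specialize (Hsr i j k Hi Hj Hk). specialize (Hpr i j k Hi Hj Hk).
  fold mob_hat V in Hsr. fold mob_check Vc in Hpr.
  replace (divDgrad h N mob_check Vc i j k)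
    with ((rc (S n) i j k - rc n i j k) / dt - taur i j k) by lra.
  rewrite <- Hsr. unfold incr, e, q, r0, gsub. field. lra.
Qed.

Lemma mobility_bounds :
  on_cells N (fun i j k => epsS / 2 <= mob_check i j k /\ epsS / 2 <= mob_hat i j k).
Proof.
  intros i j k Hi Hj Hk.
  destruct small as [Hh1 [_ [_ [_ Heps]]]]. destruct consts as [Ha _].
  destruct (errors_pointwise i j k Hi Hj Hk) as [Hr0 [Hr1 _]].
  pose proof (norminf_ge N (gsub (rc n) (rc (pred n))) i j k Hi Hj Hk) as Hinc.
  pose proof (rc_n_range i j k Hi Hj Hk).
  pose proof rc_increment.
  apply Rabs_le_between in Hinc, Hr0, Hr1. unfold r0, r1 in *. unfold gsub in *.
  assert (CS * dt <= CS * lam2 * h) by (rewrite Rmult_assoc; apply Rmult_le_compat_l; lra).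
  assert (K_apriori * h ^ 2 <= K_apriori * h) by (apply Rmult_le_compat_l; [lra|simpl; nra]).
  split.
  - unfold mob_check. lra.
  - unfold mob_hat, rhohat. eapply Rle_trans; [|apply le_sqrt_sq_plus; apply pow_le; lra]. lra.
Qed.

Lemma mobility_gap_le :
  h ^ 3 * sum3 N (fun i j k => (mob_check i j k - mob_hat i j k) ^ 2)
  <= (10 * K_apriori ^ 2 + 2 * lam2 ^ 8 * L ^ 3) * z ^ 2.
Proof.
  destruct apriori_le as [Hr0 [Hr1 _]]. destruct small as [Hh1 _]. destruct z_facts as [Hz Hz2].
  assert (Hpt : h ^ 3 * sum3 N (fun i j k => (mob_check i j k - mob_hat i j k) ^ 2)
                <= h ^ 3 * sum3 N (fun i j k => (9 * (r0 i j k * r0 i j k) + r1 i j k * r1 i j k)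
                                               + 2 * dt ^ 8)).
  { apply Rmult_le_compat_l; [apply pow_le; lra|]. apply sum3_le; intros i j k Hi Hj Hk.
    destruct (mobility_bounds i j k Hi Hj Hk) as [Hb _].
    pose proof (sq_sub_sqrt_le (mob_check i j k) (3 / 2 * rho n i j k - 1 / 2 * rho (pred n) i j k)
                  (dt ^ 4) ltac:(lra) ltac:(apply pow_le; lra)) as X.
    unfold mob_hat, rhohat. replace (dt ^ 8) with ((dt ^ 4) ^ 2) by ring.
    replace (mob_check i j k - (3 / 2 * rho n i j k - 1 / 2 * rho (pred n) i j k))
      with (3 / 2 * r0 i j k - 1 / 2 * r1 i j k) in X by (unfold mob_check, r0, r1, gsub; ring).
    assert (2 * (3 / 2 * r0 i j k - 1 / 2 * r1 i j k) ^ 2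
            <= 9 * (r0 i j k * r0 i j k) + r1 i j k * r1 i j k)
      by (pose proof (pow2_ge_0 (3 * r0 i j k + r1 i j k)); nra).
    lra. }
  rewrite sum3_plus, sum3_plus, sum3_scal, sum3_const in Hpt.
  replace (h ^ 3 * (9 * sum3 N (fun i j k => r0 i j k * r0 i j k)
                    + sum3 N (fun i j k => r1 i j k * r1 i j k) + INR N ^ 3 * (2 * dt ^ 8)))
    with (9 * ip h N r0 r0 + ip h N r1 r1 + 2 * dt ^ 8 * (h * INR N) ^ 3) in Hpt
    by (unfold ip; ring).
  rewrite <- !norm2_sq, h_N in Hpt by exact h_pos.
  assert (Hd8 : dt ^ 8 <= lam2 ^ 8 * z ^ 2).
  { rewrite Hz2.
    assert (dt ^ 8 <= lam2 ^ 8 * h ^ 8) by (rewrite <- Rpow_mult_distr; apply pow_incr; lra).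
    assert (h ^ 8 <= h ^ 7)
      by (replace (h ^ 8) with (h ^ 7 * h) by ring; pose proof (pow_lt h 7 h_pos); nra).
    pose proof (Rmult_le_compat_l (lam2 ^ 8) _ _ (pow_le lam2 8 ltac:(lra)) H0). lra. }
  pose proof (norm2_nonneg h N r0). pose proof (norm2_nonneg h N r1).
  assert (norm2 h N r0 ^ 2 <= (K_apriori * z) ^ 2) by (apply pow_incr; lra).
  assert (norm2 h N r1 ^ 2 <= (K_apriori * z) ^ 2) by (apply pow_incr; lra).
  pose proof (pow_lt L 3 L_pos).
  pose proof (Rmult_le_compat_r (2 * L ^ 3) _ _ ltac:(lra) Hd8). lra.
Qed.

Lemma flux_le : ip h N incr (fun i j k => Vc i j k - V i j k) <= K_flux * z ^ 2.
Proof.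
  destruct small as [Hh1 _]. destruct consts as [_ [_ [_ [HKf _]]]].
  set (KF := 6 * (CS ^ 2 / (4 * (epsS / 2)))).
  assert (HKF : 0 <= KF) by (unfold KF; apply Rmult_le_pos; [lra|apply Rle_mult_inv_pos; nra]).
  assert (Hrh : on_cells N (fun i j k => epsS / 2 <= mob_hat i j k))
    by (intros i j k Hi Hj Hk; apply (mobility_bounds i j k Hi Hj Hk)).
  assert (Hsum : sum3 N (fun i j k => (divDgrad h N mob_check Vc i j k
                                       - divDgrad h N mob_hat V i j k) * (Vc i j k - V i j k))
                 <= KF * sum3 N (fun i j k => (mob_check i j k - mob_hat i j k) ^ 2)).
  { apply sum3_flux_diff_le; auto; try lra.
    - intros i j k _ _ _. pose proof (ext_ge N mob_hat _ N_pos Hrh) as X. unfold Ax, Ay, Az.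
      pose proof (X i j k). pose proof (X (S i) j k). pose proof (X i (S j) k).
      pose proof (X i j (S k)). lra.
    - intros i j k Hi Hj Hk. destruct (gradinf_ge h N Vc i j k Hi Hj Hk) as [X1 [X2 X3]].
      pose proof potential_grad as Hg. fold Vc in Hg. repeat split; lra. }
  unfold ip. rewrite (sum3_ext N _ (fun i j k => dt * ((divDgrad h N mob_check Vc i j k
                       - divDgrad h N mob_hat V i j k) * (Vc i j k - V i j k))))
    by (intros i j k Hi Hj Hk; rewrite (rho_error_eq i j k Hi Hj Hk); ring).
  rewrite sum3_scal.
  pose proof mobility_gap_le as Hgap.
  apply Rle_trans
    with (dt * KF * (h ^ 3 * sum3 N (fun i j k => (mob_check i j k - mob_hat i j k) ^ 2))).
  - pose proof (Rmult_le_compat_l dt _ _ ltac:(lra) Hsum).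
    pose proof (pow_lt h 3 h_pos). nra.
  - unfold K_flux. fold KF.
    pose proof (sum3_nonneg N (fun i j k => (mob_check i j k - mob_hat i j k) ^ 2)
                  ltac:(intros i j k _ _ _; apply pow2_ge_0)).
    assert (0 <= h ^ 3 * sum3 N (fun i j k => (mob_check i j k - mob_hat i j k) ^ 2))
      by (apply Rmult_le_pos; [apply pow_le|]; lra).
    replace (lam2 * KF * (10 * K_apriori ^ 2 + 2 * lam2 ^ 8 * L ^ 3) * z ^ 2)
      with (lam2 * KF * ((10 * K_apriori ^ 2 + 2 * lam2 ^ 8 * L ^ 3) * z ^ 2)) by ring.
    apply Rmult_le_compat; [apply Rmult_le_pos; lra|lra|apply Rmult_le_compat_r; lra|exact Hgap].
Qed.

Lemma potential_split :
  gamma * ip h N incr dS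
  = ip h N incr (fun i j k => Vc i j k - V i j k) + chi / 2 * ip h N incr s
    - chi ^ 2 * dt / (4 * theta) * ip h N incr (fun i j k => e i j k - r0 i j k).
Proof.
  unfold ip.
  transitivity (h ^ 3 * sum3 N (fun i j k =>
     (incr i j k * (Vc i j k - V i j k) + chi / 2 * (incr i j k * s i j k))
     - chi ^ 2 * dt / (4 * theta) * (incr i j k * (e i j k - r0 i j k)))).
  - rewrite <- Rmult_assoc, (Rmult_comm gamma), Rmult_assoc, <- sum3_scal. f_equal.
    apply sum3_ext; intros i j k _ _ _.
    unfold dS, Vc, V, potential, s, e, r0, gsub. ring.
  - rewrite sum3_minus, sum3_plus, !sum3_scal. ring.
Qed.

Lemma coupling_le : ip h N incr s <= (norm2 h N e + norm2 h N q) * norm2 h N s.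
Proof.
  eapply Rle_trans; [apply ip_le_norm2; exact h_pos|].
  apply Rmult_le_compat_r; [apply norm2_nonneg|]. apply norm2_sub_le; exact h_pos.
Qed.

Lemma relaxation_ge :
  norm2 h N e ^ 2 - norm2 h N e * norm2 h N r0 - norm2 h N q * norm2 h N e
  - norm2 h N q * norm2 h N r0 <= ip h N incr (fun i j k => e i j k - r0 i j k).
Proof.
  replace (ip h N incr (fun i j k => e i j k - r0 i j k))
    with (ip h N e e - ip h N e r0 - ip h N q e + ip h N q r0).
  - rewrite <- (norm2_sq h N h_pos e).
    pose proof (ip_le_norm2 h N h_pos e r0). pose proof (ip_le_norm2 h N h_pos q e).
    pose proof (ip_cauchy_schwarz h N h_pos q r0) as Hqr. apply Rabs_le_between in Hqr. lra.
  - unfold ip. rewrite <- !Rmult_minus_distr_l, <- Rmult_plus_distr_l. f_equal.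
    rewrite <- !sum3_minus, <- sum3_plus. apply sum3_ext; intros i j k _ _ _. unfold incr. ring.
Qed.

Lemma entropy_ge :
  key_coerc epsS CS * trunc_mass h N e - key_lip epsS CS * norm2 h N pert * norm2 h N e
  - key_lip epsS CS * norm2 h N pert ^ 2 <= ip h N incr dS.
Proof.
  apply ip_ge_of_pointwise; auto.
  - pose proof (key_lip_ge epsS CS epsS_pos CS_pos) as [Hl _].
    pose proof (proj1 (Sh_consts_pos epsS CS epsS_pos CS_pos)). lra.
  - intros i j k _ _ _. unfold pert.
    pose proof (Rabs_pos (q i j k)). pose proof (Rabs_pos (r0 i j k)). lra.
  - intros i j k Hi Hj Hk. destruct (errors_pointwise i j k Hi Hj Hk) as [_ [_ [Hq Hr0]]].
    apply (Sh_key_estimate epsS CS epsS_pos CS_pos); auto.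
Qed.

Lemma energy_ineq : energy_lhs * trunc_mass h N e
  <= energy_A1 * z * norm2 h N e + energy_A0 * z ^ 2.
Proof.
  destruct consts as [Ha [Ht [Hq [Hf [Hk [Hc _]]]]]]. destruct z_facts as [Hz _].
  destruct apriori_le as [Hr0 [_ Hf0]]. destruct truncation_le as [_ Htf].
  destruct small as [Hh1 _].
  pose proof (key_lip_ge epsS CS epsS_pos CS_pos) as [Hl _].
  pose proof (proj1 (Sh_consts_pos epsS CS epsS_pos CS_pos)).
  assert (Hall : forall X K', X <= K' * z -> K' <= K_all -> X <= K_all * z)
    by (intros X K' HX HK'; pose proof (Rmult_le_compat_r z _ _ (Rlt_le _ _ Hz) HK'); lra).
  assert (Hkap : 0 <= chi ^ 2 * dt / (4 * theta)) by (apply Rle_mult_inv_pos; nra).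
  pose proof (norm2_nonneg h N e). pose proof (norm2_nonneg h N q).
  pose proof (norm2_nonneg h N r0). pose proof (norm2_nonneg h N pert).
  pose proof (norm2_nonneg h N f0). pose proof (norm2_nonneg h N tauf).
  unfold energy_lhs, energy_A1, energy_A0.
  apply (energy_closure gamma (key_coerc epsS CS) (key_lip epsS CS) chi theta dt
           (norm2 h N e) (trunc_mass h N e) (norm2 h N r0) (norm2 h N f0) (norm2 h N q)
           (norm2 h N pert) (norm2 h N tauf) (norm2 h N s)
           (ip h N incr (fun i j k => Vc i j k - V i j k)));
    try lra.
  - unfold K_all; lra.
  - pose proof potential_split as Hsplit. pose proof entropy_ge as Hent.
    pose proof (Rmult_le_compat_l (chi / 2) _ _ ltac:(lra) coupling_le).
    pose proof (Rmult_le_compat_l _ _ _ Hkap relaxation_ge).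
    pose proof (Rmult_le_compat_l gamma _ _ ltac:(lra) Hent). lra.
  - apply phi_error_le.
  - split; [lra|]. apply (Hall _ (K_q + K_apriori)); [apply pert_le|unfold K_all; lra].
  - split; [lra|]. apply (Hall _ K_apriori); [exact Hf0|unfold K_all; lra].
  - apply (Hall _ K_apriori); [exact Hr0|unfold K_all; lra].
  - apply (Hall _ K_q); [apply q_le|unfold K_all; lra].
  - split; [lra|]. apply (Hall _ K_trunc); [exact Htf|unfold K_all; lra].
  - apply flux_le.
  - unfold K_kap, Rdiv. apply Rmult_le_compat_r; [left; apply Rinv_0_lt_compat; lra|].
    apply Rmult_le_compat_l; [apply pow2_ge_0|lra].
  - unfold K_cp, Rdiv. apply Rmult_le_compat_r; [left; apply Rinv_0_lt_compat; lra|].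
    apply Rmult_le_compat_l; lra.
Qed.

Lemma rho_error_le : norm2 h N e <= h ^ 3.
Proof.
  destruct consts as [_ [_ [_ [_ [_ [_ [Hg [HA1 HA0]]]]]]]].
  destruct small as [Hh1 [HA [HB _]]]. destruct z_facts as [Hz Hz2].
  apply (error_le_of_energy h z energy_lhs (norm2 h N e) (trunc_mass h N e)
           energy_A1 energy_A0); auto; try lra.
  - apply norm2_nonneg.
  - apply trunc_mass_nonneg; exact h_pos.
  - apply energy_ineq.
  - apply norm2_sq_le_trunc_mass; exact h_pos.
Qed.

End ErrorStep.

Theorem mainTheorem8 :
  forall (a b gamma mu alpha chi theta epsS CS Ctau lam1 lam2 : R),
    a < b -> 0 < gamma -> 0 < mu -> 0 < alpha -> 0 < chi -> 0 < theta ->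
    0 < epsS -> 0 < CS -> 0 < Ctau -> 0 < lam1 -> 0 < lam2 ->
  exists dt0 h0 : R, 0 < dt0 /\ 0 < h0 /\
  forall (N : nat) (dt : R), (1 <= N)%nat ->
  let h := (b - a) / INR N in
    0 < dt -> dt <= dt0 -> h <= h0 ->
    lam1 * h <= dt -> dt <= lam2 * h ->
  forall (n : nat) (rho phi rc pc : nat -> grid) (taur tauf : grid),
    (2 <= n)%nat ->
    scheme_step gamma mu alpha chi theta dt h N rho phi n ->
    on_cells N (fun i j k => 0 < rho (S n) i j k) ->
    perturbed_step gamma mu alpha chi theta dt h N rc pc taur tauf n ->
    norm2 h N taur <= Ctau * (dt ^ 4 + h ^ 4) ->
    norm2 h N tauf <= Ctau * (dt ^ 4 + h ^ 4) ->
    mean a b h N taur = 0 ->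
    (forall m, (n - 2 <= m <= S n)%nat -> mean a b h N (rc m) = mean a b h N (rho m)) ->
    (forall m, (n - 2 <= m <= S n)%nat ->
       on_cells N (fun i j k => epsS <= rc m i j k <= CS) /\
       gradinf h N (rc m) <= CS) ->
    (forall m, (n - 1 <= m <= S n)%nat ->
       norminf N (gsub (rc m) (rc (pred m))) <= CS * dt /\
       gradinf h N (gsub (rc m) (rc (pred m))) <= CS * dt) ->
    (let V := potential gamma chi theta dt (rc (S n)) (rc n) (pc (S n)) (pc n) in
     norminf N V + gradinf h N V <= CS) ->
    (forall m, (n - 2 <= m <= n)%nat ->
       norm2 h N (gsub (rc m) (rho m)) <= Rpower dt (15/4) + Rpower h (15/4) /\
       norm2 h N (gsub (pc m) (phi m)) <= Rpower dt (15/4) + Rpower h (15/4)) ->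
    norm2 h N (gsub (rc (S n)) (rho (S n))) <= dt ^ 3 + h ^ 3.
Proof.
  intros a b gamma mu alpha chi theta epsS CS Ctau lam1 lam2
         Hab Hg Hmu Hal Hchi Hth He HC HCt Hl1 Hl2.
  exists 1, (step_h0 gamma chi theta epsS CS Ctau lam2 (b - a)).
  split; [lra|]. split; [apply step_h0_pos; lra|].
  intros N dt HN h Hdt _ Hh0 _ Hdth n rho phi rc pc taur tauf Hn Hsch Hpos Hpert HTr HTf _ _
         Hrange Hincr Hpot Hapr.
  assert (HNr : 0 < INR N) by (apply lt_0_INR; lia).
  pose proof (pow_le dt 3 ltac:(lra)).
  enough (norm2 h N (gsub (rc (S n)) (rho (S n))) <= h ^ 3) by lra.
  apply (rho_error_le gamma mu alpha chi theta epsS CS Ctau lam2 (b - a)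
           Hg Hmu Hal Hchi Hth He HC HCt Hl2 ltac:(lra) h dt N n rho phi rc pc taur tauf); auto.
  - unfold h. apply Rdiv_lt_0_compat; lra.
  - unfold h. field. lra.
  - apply (Hrange n); lia.
  - apply (Hrange (S n)); lia.
  - apply (Hincr n); lia.
  - cbv zeta in Hpot.
    pose proof (norminf_nonneg N (potential gamma chi theta dt (rc (S n)) (rc n) (pc (S n)) (pc n))).
    lra.
  - apply (Hapr n); lia.
  - apply (Hapr (pred n)); lia.
Qed.
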